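(* Let $\mathcal X$ be a Scott set, $T\in\mathcal X$ a complete consistent extension of $\mathrm{PA}$, $M\models T$ a model coded in $\mathcal X$, and $U$ a non-principal ultrafilter on the Boolean algebra $\mathcal X$. Then $K=\prod_{\mathcal X}M/U$ is an elementary extension of $M$ (via $c\mapsto[\bar c]$, $\bar c$ the constant function) and $K$ is recursively saturated.
   Context: A Scott set is a nonempty $\mathcal X\subseteq\mathcal P(\omega)$ closed under finite unions, complements and Turing reducibility, such that every theory in $\mathcal X$ has a complete consistent extension in $\mathcal X$. $M$ is coded in $\mathcal X$ if (up to isomorphism) its domain is a subset of $\omega$ belonging to $\mathcal X$ and its elementary diagram $\mathrm{Th}(M,a)_{a\in M}$ (as a set of Gödel numbers) belongs to $\mathcal X$. $\prod_{\mathcal X}M$ is the set of functions $f:\omega\to M$ whose graphs (coded via pairing) belong to $\mathcal X$. For an ultrafilter $U$ on $\mathcal X$, $f\equiv_U g$ iff $\{n:f(n)=g(n)\}\in U$, and $\prod_{\mathcal X}M/U$ is the set of $\equiv_U$-classes with $+,\cdot,<,0,1$ interpreted pointwise (mod $U$). Recursively saturated: every type over the model with finitely many parameters whose set of formulas is recursive is realized. *)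

From Stdlib Require Import List Arith ClassicalEpsilon ClassicalDescription.
Import ListNotations.

Inductive rcode : Type :=
| rZero | rSucc | rProj (i : nat) | rOracle
| rComp (f : rcode) (gs : list rcode)
| rPrec (f g : rcode)
| rMin (f : rcode).

(* [reval B c xs v]: program [c] with oracle [B] on arguments [xs] halts with
   output [v]. Missing arguments default to 0. *)
Inductive reval (B : nat -> Prop) : rcode -> list nat -> nat -> Prop :=
| ev_zero xs : reval B rZero xs 0
| ev_succ xs : reval B rSucc xs (S (nth 0 xs 0))
| ev_proj i xs : reval B (rProj i) xs (nth i xs 0)
| ev_oracle_in xs : B (nth 0 xs 0) -> reval B rOracle xs 1
| ev_oracle_out xs : ~ B (nth 0 xs 0) -> reval B rOracle xs 0
| ev_comp f gs xs ys v :
    Forall2 (fun g y => reval B g xs y) gs ys -> reval B f ys v ->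
    reval B (rComp f gs) xs v
| ev_prec0 f g xs v : reval B f xs v -> reval B (rPrec f g) (0 :: xs) v
| ev_precS f g n xs v w :
    reval B (rPrec f g) (n :: xs) v -> reval B g (n :: v :: xs) w ->
    reval B (rPrec f g) (S n :: xs) w
| ev_min f xs n :
    reval B f (n :: xs) 0 ->
    (forall m, m < n -> exists k, reval B f (m :: xs) (S k)) ->
    reval B (rMin f) xs n.

Definition turing_le (A B : nat -> Prop) : Prop :=
  exists c : rcode, forall n,
    (A n -> reval B c [n] 1) /\ (~ A n -> reval B c [n] 0).

Definition recursive (A : nat -> Prop) : Prop := turing_le A (fun _ => False).

(* Language of arithmetic {0,1,+,*,<} with constant symbols c_k (k : nat);
   de Bruijn variables. *)

Inductive term : Type :=
| tVar (n : nat) | tConst (k : nat) | tZero | tOne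
| tPlus (t u : term) | tTimes (t u : term).

Inductive form : Type :=
| fEq (t u : term) | fLt (t u : term) | fFalse
| fImp (p q : form) | fAll (p : form).

Definition fNeg p := fImp p fFalse.
Definition fAnd p q := fNeg (fImp p (fNeg q)).
Definition fIff p q := fAnd (fImp p q) (fImp q p).
Definition fEx p := fNeg (fAll (fNeg p)).

Definition pair (a b : nat) : nat := (a + b) * (a + b + 1) / 2 + b.

Fixpoint gnt (t : term) : nat :=
  match t with
  | tVar n => pair 0 n
  | tConst k => pair 1 k
  | tZero => pair 2 0
  | tOne => pair 3 0
  | tPlus t u => pair 4 (pair (gnt t) (gnt u))
  | tTimes t u => pair 5 (pair (gnt t) (gnt u))
  end.

Fixpoint gn (p : form) : nat :=
  match p with
  | fEq t u => pair 0 (pair (gnt t) (gnt u))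
  | fLt t u => pair 1 (pair (gnt t) (gnt u))
  | fFalse => pair 2 0
  | fImp p q => pair 3 (pair (gn p) (gn q))
  | fAll p => pair 4 (gn p)
  end.

Fixpoint tbound (k : nat) (t : term) : Prop :=
  match t with
  | tVar n => n < k
  | tConst _ | tZero | tOne => True
  | tPlus t u | tTimes t u => tbound k t /\ tbound k u
  end.
Fixpoint fbound (k : nat) (p : form) : Prop :=
  match p with
  | fEq t u | fLt t u => tbound k t /\ tbound k u
  | fFalse => True
  | fImp p q => fbound k p /\ fbound k q
  | fAll p => fbound (S k) p
  end.
Definition sentence (p : form) : Prop := fbound 0 p.

Fixpoint tconst (k : nat) (t : term) : Prop :=
  match t with
  | tConst j => j = k
  | tVar _ | tZero | tOne => False
  | tPlus t u | tTimes t u => tconst k t \/ tconst k u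
  end.
Fixpoint fconst (k : nat) (p : form) : Prop :=
  match p with
  | fEq t u | fLt t u => tconst k t \/ tconst k u
  | fFalse => False
  | fImp p q => fconst k p \/ fconst k q
  | fAll p => fconst k p
  end.
Definition pure (p : form) : Prop := forall k, ~ fconst k p.

Fixpoint tsubst (s : nat -> term) (t : term) : term :=
  match t with
  | tVar n => s n
  | tConst k => tConst k
  | tZero => tZero
  | tOne => tOne
  | tPlus t u => tPlus (tsubst s t) (tsubst s u)
  | tTimes t u => tTimes (tsubst s t) (tsubst s u)
  end.
Definition tshift := tsubst (fun n => tVar (S n)).
Definition up (s : nat -> term) (n : nat) : term :=
  match n with 0 => tVar 0 | S m => tshift (s m) end.
Fixpoint fsubst (s : nat -> term) (p : form) : form :=
  match p with
  | fEq t u => fEq (tsubst s t) (tsubst s u)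
  | fLt t u => fLt (tsubst s t) (tsubst s u)
  | fFalse => fFalse
  | fImp p q => fImp (fsubst s p) (fsubst s q)
  | fAll p => fAll (fsubst (up s) p)
  end.
Definition fshift := fsubst (fun n => tVar (S n)).
Definition inst (t : term) (p : form) : form :=
  fsubst (fun n => match n with 0 => t | S m => tVar m end) p.

Inductive LAx : form -> Prop :=
| ax1 p q : LAx (fImp p (fImp q p))
| ax2 p q r : LAx (fImp (fImp p (fImp q r)) (fImp (fImp p q) (fImp p r)))
| ax3 p : LAx (fImp (fNeg (fNeg p)) p)
| ax4 p t : LAx (fImp (fAll p) (inst t p))
| ax5 p q : LAx (fImp (fAll (fImp p q)) (fImp (fAll p) (fAll q)))
| ax6 p : LAx (fImp p (fAll (fshift p)))
| ax_refl t : LAx (fEq t t)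
| ax_eq t1 t2 u1 u2 :
    LAx (fImp (fEq t1 u1) (fImp (fEq t2 u2) (fImp (fEq t1 t2) (fEq u1 u2))))
| ax_lt t1 t2 u1 u2 :
    LAx (fImp (fEq t1 u1) (fImp (fEq t2 u2) (fImp (fLt t1 t2) (fLt u1 u2))))
| ax_plus t1 t2 u1 u2 :
    LAx (fImp (fEq t1 u1) (fImp (fEq t2 u2) (fEq (tPlus t1 t2) (tPlus u1 u2))))
| ax_times t1 t2 u1 u2 :
    LAx (fImp (fEq t1 u1) (fImp (fEq t2 u2) (fEq (tTimes t1 t2) (tTimes u1 u2))))
| ax_gen p : LAx p -> LAx (fAll p).

Inductive Prf (G : form -> Prop) : form -> Prop :=
| prf_ax p : LAx p -> Prf G p
| prf_hyp p : G p -> Prf G p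
| prf_mp p q : Prf G (fImp p q) -> Prf G p -> Prf G q.

Definition decode (A : nat -> Prop) : form -> Prop := fun p => A (gn p).
Definition consistent (A : nat -> Prop) : Prop := ~ Prf (decode A) fFalse.
Definition is_theory (A : nat -> Prop) : Prop :=
  forall n, A n -> exists p, n = gn p /\ sentence p.
Definition complete (A : nat -> Prop) : Prop :=
  forall p, sentence p -> A (gn p) \/ A (gn (fNeg p)).
Definition is_LA_theory (A : nat -> Prop) : Prop :=
  forall n, A n -> exists p, n = gn p /\ sentence p /\ pure p.
Definition LA_complete (A : nat -> Prop) : Prop :=
  forall p, sentence p -> pure p -> A (gn p) \/ A (gn (fNeg p)).

Definition succ (t : term) := tPlus t tOne.
Definition v0 := tVar 0. Definition v1 := tVar 1. Definition v2 := tVar 2.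
Definition PA_basic : list form :=
  [ fAll (fNeg (fEq (succ v0) tZero));
    fAll (fAll (fImp (fEq (succ v1) (succ v0)) (fEq v1 v0)));
    fAll (fEq (tPlus v0 tZero) v0);
    fAll (fAll (fEq (tPlus v1 (succ v0)) (succ (tPlus v1 v0))));
    fAll (fEq (tTimes v0 tZero) tZero);
    fAll (fAll (fEq (tTimes v1 (succ v0)) (tPlus (tTimes v1 v0) v1)));
    fAll (fAll (fIff (fLt v1 v0) (fEx (fEq (tPlus v2 (succ v0)) v1)))) ].
Definition ind_ax (p : form) : form :=
  fImp (fAnd (inst tZero p)
             (fAll (fImp p (fsubst (fun n => match n with
                                             | 0 => succ (tVar 0)
                                             | m => tVar m end) p))))
       (fAll p).
Fixpoint nall (k : nat) (p : form) : form :=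
  match k with 0 => p | S k => fAll (nall k p) end.
Definition PA_axiom (p : form) : Prop :=
  In p PA_basic \/
  (exists k q, pure q /\ p = nall k (ind_ax q) /\ sentence p).

Definition compl_ext_PA (T : nat -> Prop) : Prop :=
  is_LA_theory T /\ consistent T /\ LA_complete T /\
  (forall p, PA_axiom p -> T (gn p)).

Record structure := {
  dom :> Type;
  szero : dom; sone : dom;
  sadd : dom -> dom -> dom; smul : dom -> dom -> dom;
  slt : dom -> dom -> Prop }.

Definition scons {A : Type} (a : A) (r : nat -> A) (n : nat) : A :=
  match n with 0 => a | S m => r m end.

Fixpoint teval (M : structure) (c r : nat -> M) (t : term) : M :=
  match t with
  | tVar n => r n
  | tConst k => c k
  | tZero => szero M
  | tOne => sone M
  | tPlus t u => sadd M (teval M c r t) (teval M c r u)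
  | tTimes t u => smul M (teval M c r t) (teval M c r u)
  end.

(* c : interpretation of constant symbols, r : assignment of variables *)
Fixpoint sat (M : structure) (c r : nat -> M) (p : form) : Prop :=
  match p with
  | fEq t u => teval M c r t = teval M c r u
  | fLt t u => slt M (teval M c r t) (teval M c r u)
  | fFalse => False
  | fImp p q => sat M c r p -> sat M c r q
  | fAll p => forall a : M, sat M c (scons a r) p
  end.

Definition psat (M : structure) (r : nat -> M) (p : form) : Prop :=
  sat M (fun _ => szero M) r p.

Definition models_LA (M : structure) (T : nat -> Prop) : Prop :=
  forall p, sentence p -> pure p -> T (gn p) -> psat M (fun _ => szero M) p.

Definition scott_set (X : (nat -> Prop) -> Prop) : Prop :=
  (exists A, X A) /\
  (forall A B, X A -> X B -> X (fun n => A n \/ B n)) /\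
  (forall A, X A -> X (fun n => ~ A n)) /\
  (forall A B, X B -> turing_le A B -> X A) /\
  (forall A, X A -> is_theory A -> consistent A ->
     exists B, X B /\ (forall n, A n -> B n) /\
               is_theory B /\ consistent B /\ complete B).

(* Coded models: [code] identifies M with a subset of omega *)
Section Coded.
Variables (M : structure) (code : M -> nat).

Definition cdomain : nat -> Prop := fun k => exists a, code a = k.

(* c_k is interpreted by the element with code k (if any) *)
Definition cval (k : nat) : M :=
  epsilon (inhabits (szero M)) (fun a => code a = k).

(* elementary diagram Th(M, a)_{a in M}, as a set of Goedel numbers *)
Definition diagram : nat -> Prop := fun n =>
  exists p, n = gn p /\ sentence p /\ (forall k, fconst k p -> cdomain k) /\
            sat M cval (fun _ => szero M) p.

Definition graph (f : nat -> M) : nat -> Prop :=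
  fun m => exists n, m = pair n (code (f n)).
End Coded.

Definition coded_in (X : (nat -> Prop) -> Prop) (M : structure) (code : M -> nat) :=
  (forall a b, code a = code b -> a = b) /\
  X (cdomain M code) /\ X (diagram M code).

Definition ultrafilter (X U : (nat -> Prop) -> Prop) : Prop :=
  (forall A, U A -> X A) /\
  U (fun _ => True) /\ ~ U (fun _ => False) /\
  (forall A B, U A -> U B -> U (fun n => A n /\ B n)) /\
  (forall A B, U A -> X B -> (forall n, A n -> B n) -> U B) /\
  (forall A, X A -> U A \/ U (fun n => ~ A n)).

Definition nonprincipal (U : (nat -> Prop) -> Prop) : Prop :=
  forall n, ~ U (fun m => m = n).

Section Ultrapower.
Variables (X U : (nat -> Prop) -> Prop) (M : structure) (code : M -> nat).

Definition inProd (f : nat -> M) : Prop := X (graph M code f).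

Definition cls (f : nat -> M) : (nat -> M) -> Prop :=
  fun g => inProd g /\ U (fun n => f n = g n).

Definition Kcar : Type := { C : (nat -> M) -> Prop | exists f, inProd f /\ C = cls f }.

Definition rep (C : Kcar) : nat -> M :=
  proj1_sig (constructive_indefinite_description _ (proj2_sig C)).

Variable HK : inhabited Kcar.
Definition Kdflt : Kcar := epsilon HK (fun _ => True).

(* class of f, for f in prod_X M (the default branch is never used, since
   prod_X M is closed under the pointwise operations; it only makes the
   definition total) *)
Definition lift (f : nat -> M) : Kcar :=
  match excluded_middle_informative (inProd f) with
  | left H => exist _ (cls f) (ex_intro _ f (conj H eq_refl))
  | right _ => Kdflt
  end.

Definition Kstr : structure := {|
  dom := Kcar;
  szero := lift (fun _ => szero M);
  sone := lift (fun _ => sone M);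
  sadd := fun C D => lift (fun n => sadd M (rep C n) (rep D n));
  smul := fun C D => lift (fun n => smul M (rep C n) (rep D n));
  slt := fun C D => U (fun n => slt M (rep C n) (rep D n)) |}.

Definition diag_emb (c : M) : Kstr := lift (fun _ => c).
End Ultrapower.

Definition elementary {M N : structure} (e : M -> N) : Prop :=
  forall p, pure p -> forall r : nat -> M, psat M r p <-> psat N (fun n => e (r n)) p.

(* recursive saturation: types p(x, y_1..y_n) of L_A, recursive as a set of
   Goedel numbers, with parameters b_1..b_n (variable 0 is x, variable i is
   y_i, assigned b (i-1)), finitely satisfiable in N, are realized in N *)
Definition rec_saturated (N : structure) : Prop :=
  forall (n : nat) (P : form -> Prop) (b : nat -> N),
    (forall p, P p -> pure p /\ fbound (S n) p) ->
    recursive (fun m => exists p, P p /\ gn p = m) ->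
    (forall l : list form, (forall p, In p l -> P p) ->
       exists a : N, forall p, In p l -> psat N (scons a b) p) ->
    exists a : N, forall p, P p -> psat N (scons a b) p.

(* Elements of the X-ultrapower are represented by sequences in M whose sequence of codes is
   computable from some set in X. Since X is closed under Turing joins and contains the
   elementary diagram of M, truth in M along such sequences is decidable in X, and a definable
   Skolem function of such sequences is again one (search the diagram for the least code of a
   witness). This yields Łoś's theorem for the X-ultrapower, hence elementarity of the diagonal
   embedding.

   For recursive saturation, let p(x, b) be a recursive type, finitely satisfiable in K; its set
   of codes is in X. At coordinate n let k(n) <= n be the largest level such that the formulas
   of p with code below k(n) are jointly satisfiable in M at the parameters b(n), and let w(n)
   realize them. Then w is again such a sequence, and by finite satisfiability, Łoś and
   non-principality of U, almost every k(n) exceeds the code of any fixed formula of p; so the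
   class of w realizes p. *)

From Pilot Require Import Defs.
From Stdlib Require Import List Arith Lia.
From Stdlib Require Import Classical ClassicalEpsilon ClassicalDescription.
From Stdlib Require Import ProofIrrelevance FunctionalExtensionality PropExtensionality.
Import ListNotations.

(** * Computability relative to an oracle *)

Definition chi (A : nat -> Prop) (n : nat) : nat :=
  if excluded_middle_informative (A n) then 1 else 0.

Lemma chi_true A n : A n -> chi A n = 1.
Proof. unfold chi; destruct excluded_middle_informative; tauto. Qed.
Lemma chi_false A n : ~ A n -> chi A n = 0.
Proof. unfold chi; destruct excluded_middle_informative; tauto. Qed.

Fixpoint subst_oracle (d c : rcode) : rcode :=
  match c with
  | rOracle => d
  | rComp f gs => rComp (subst_oracle d f) (map (subst_oracle d) gs)
  | rPrec f g => rPrec (subst_oracle d f) (subst_oracle d g)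
  | rMin f => rMin (subst_oracle d f)
  | c => c
  end.

Section Relativization.
Variables (A B : nat -> Prop) (d : rcode).
Hypothesis Hd : forall ys, reval B d ys (chi A (nth 0 ys 0)).

Fixpoint reval_subst_oracle c xs v (H : reval A c xs v) {struct H} :
  reval B (subst_oracle d c) xs v.
Proof.
  destruct H.
  - constructor.
  - constructor.
  - constructor.
  - simpl. rewrite <- (chi_true A _ H). apply Hd.
  - simpl. rewrite <- (chi_false A _ H). apply Hd.
  - simpl. eapply ev_comp; [| exact (reval_subst_oracle _ _ _ H0)].
    clear H0. revert gs ys H.
    refine (fix F2 gs ys (HF : Forall2 (fun g y => reval A g xs y) gs ys) :=
      match HF with
      | Forall2_nil _ => Forall2_nil _
      | Forall2_cons _ _ h t => Forall2_cons _ _ (reval_subst_oracle _ _ _ h) (F2 _ _ t)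
      end).
  - simpl. apply ev_prec0. exact (reval_subst_oracle _ _ _ H).
  - simpl. eapply ev_precS. exact (reval_subst_oracle _ _ _ H). exact (reval_subst_oracle _ _ _ H0).
  - simpl. apply ev_min. exact (reval_subst_oracle _ _ _ H).
    intros m Hm. destruct (H0 m Hm) as [k Hk]. exists k. exact (reval_subst_oracle _ _ _ Hk).
Defined.
End Relativization.

Definition computable (B : nat -> Prop) (k : nat) (f : list nat -> nat) : Prop :=
  exists c, forall xs, length xs = k -> reval B c xs (f xs).

Lemma computable_relativize A B k f :
  computable A k f -> computable B 1 (fun ys => chi A (nth 0 ys 0)) -> computable B k f.
Proof.
  intros [c Hc] [d Hd].
  exists (subst_oracle (rComp d [rProj 0]) c). intros xs Hl.
  apply reval_subst_oracle with (A := A). 2: now apply Hc.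
  intros ys. apply ev_comp with (ys := [nth 0 ys 0]).
  - constructor. constructor. constructor.
  - exact (Hd [nth 0 ys 0] eq_refl).
Qed.

Lemma least_witness (P : nat -> Prop) :
  (exists n, P n) -> exists n, P n /\ forall m, m < n -> ~ P m.
Proof.
  intros [n Hn]. induction n as [n IH] using lt_wf_ind.
  destruct (classic (exists m, m < n /\ P m)) as [[m [Hm Pm]]|Hno].
  - apply (IH m Hm Pm).
  - exists n; split; auto. intros m Hm Pm; apply Hno; eauto.
Qed.

Definition least (P : nat -> Prop) : nat :=
  epsilon (inhabits 0) (fun n => P n /\ forall m, m < n -> ~ P m).

Lemma least_spec P : (exists n, P n) -> P (least P) /\ forall m, m < least P -> ~ P m.
Proof. intros H. unfold least. apply epsilon_spec. now apply least_witness. Qed.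

Lemma least_unique P n : P n -> (forall m, m < n -> ~ P m) -> least P = n.
Proof.
  intros Pn Hm. destruct (least_spec P) as [H1 H2]; eauto.
  destruct (lt_eq_lt_dec (least P) n) as [[Hlt|]|Hgt]; auto.
  - exfalso; exact (Hm _ Hlt H1).
  - exfalso; exact (H2 _ Hgt Pn).
Qed.

Fixpoint prim_rec (f g : list nat -> nat) (n : nat) (xs : list nat) : nat :=
  match n with
  | 0 => f xs
  | S n => g (n :: prim_rec f g n xs :: xs)
  end.

Section Computable.
Variable B : nat -> Prop.

Lemma computable_ext k f g :
  (forall xs, length xs = k -> f xs = g xs) -> computable B k f -> computable B k g.
Proof. intros H [c Hc]; exists c; intros; rewrite <- H; auto. Qed.

Lemma computable_zero k : computable B k (fun _ => 0).
Proof. exists rZero; intros; constructor. Qed.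

Lemma computable_proj k i : computable B k (fun xs => nth i xs 0).
Proof. exists (rProj i); intros; constructor. Qed.

Lemma computable_succ : computable B 1 (fun xs => S (nth 0 xs 0)).
Proof. exists rSucc; intros; constructor. Qed.

Lemma computable_oracle : computable B 1 (fun xs => chi B (nth 0 xs 0)).
Proof.
  exists rOracle; intros. unfold chi; destruct excluded_middle_informative.
  now constructor. now constructor.
Qed.

Lemma computable_comp k m f gs :
  computable B m f -> Forall (computable B k) gs -> length gs = m ->
  computable B k (fun xs => f (map (fun g => g xs) gs)).
Proof.
  intros [c Hc] HF Hl.
  assert (exists cs, forall xs, length xs = k ->
            Forall2 (fun g y => reval B g xs y) cs (map (fun g => g xs) gs)) as [cs Hcs].
  { clear Hl. induction HF as [|g gs [cg Hg] _ [cs Hcs]].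
    - exists []. intros; constructor.
    - exists (cg :: cs). intros; simpl; constructor; auto. }
  exists (rComp c cs). intros xs Hxs. eapply ev_comp. apply Hcs; auto.
  apply Hc. rewrite length_map; auto.
Qed.

Lemma computable_prec k f g :
  computable B k f -> computable B (S (S k)) g ->
  computable B (S k) (fun xs => prim_rec f g (hd 0 xs) (tl xs)).
Proof.
  intros [cf Hf] [cg Hg]. exists (rPrec cf cg).
  intros [|n xs] Hl; [discriminate|]. simpl in Hl |- *. injection Hl as Hl.
  induction n; simpl.
  - constructor. auto.
  - eapply ev_precS. apply IHn. apply Hg. simpl; auto.
Qed.

Lemma computable_min k f :
  computable B (S k) f -> (forall xs, length xs = k -> exists n, f (n :: xs) = 0) ->
  computable B k (fun xs => least (fun n => f (n :: xs) = 0)).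
Proof.
  intros [c Hc] Hex. exists (rMin c). intros xs Hl.
  destruct (least_spec (fun n => f (n :: xs) = 0)) as [H1 H2]; auto.
  constructor.
  - pattern 0 at 2. rewrite <- H1. apply Hc; simpl; auto.
  - intros m Hm. specialize (H2 m Hm). destruct (f (m :: xs)) eqn:E; [tauto|].
    exists n; rewrite <- E; apply Hc; simpl; auto.
Qed.

Lemma computable_comp1 k f g :
  computable B 1 f -> computable B k g -> computable B k (fun xs => f [g xs]).
Proof. intros Hf Hg. apply (computable_comp k 1 f [g]); auto. Qed.

Lemma computable_comp2 k f g1 g2 :
  computable B 2 f -> computable B k g1 -> computable B k g2 ->
  computable B k (fun xs => f [g1 xs; g2 xs]).
Proof. intros Hf H1 H2. apply (computable_comp k 2 f [g1; g2]); auto. Qed.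

Lemma computable_S k g : computable B k g -> computable B k (fun xs => S (g xs)).
Proof. intros H. apply (computable_comp1 k _ g computable_succ H). Qed.

Lemma computable_const k c : computable B k (fun _ => c).
Proof. induction c. apply computable_zero. apply computable_S; auto. Qed.

Lemma computable_add k g1 g2 :
  computable B k g1 -> computable B k g2 -> computable B k (fun xs => g1 xs + g2 xs).
Proof.
  intros H1 H2.
  assert (Hadd : computable B 2 (fun xs => nth 0 xs 0 + nth 1 xs 0)).
  { eapply computable_ext;
      [| apply (computable_prec 1 (fun xs => nth 0 xs 0) (fun xs => S (nth 1 xs 0)))].
    - intros [|a [|b [|]]] H; try discriminate; simpl. induction a; simpl; auto.
    - apply computable_proj.
    - apply computable_S, computable_proj. }
  eapply computable_ext; [|apply (computable_comp2 k _ g1 g2 Hadd)]; auto.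
Qed.

Lemma computable_mul k g1 g2 :
  computable B k g1 -> computable B k g2 -> computable B k (fun xs => g1 xs * g2 xs).
Proof.
  intros H1 H2.
  assert (Hmul : computable B 2 (fun xs => nth 0 xs 0 * nth 1 xs 0)).
  { eapply computable_ext;
      [| apply (computable_prec 1 (fun xs => 0) (fun xs => nth 1 xs 0 + nth 2 xs 0))].
    - intros [|a [|b [|]]] H; try discriminate; simpl; clear H.
      induction a; simpl; auto. rewrite IHa; lia.
    - apply computable_zero.
    - apply computable_add; apply computable_proj. }
  eapply computable_ext; [|apply (computable_comp2 k _ g1 g2 Hmul)]; auto.
Qed.

Lemma computable_sub k g1 g2 :
  computable B k g1 -> computable B k g2 -> computable B k (fun xs => g1 xs - g2 xs).
Proof.
  intros H1 H2.
  assert (Hpred : computable B 1 (fun xs => pred (nth 0 xs 0))).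
  { eapply computable_ext; [| apply (computable_prec 0 (fun xs => 0) (fun xs => nth 0 xs 0))].
    - intros [|a []] H; try discriminate; simpl. destruct a; auto.
    - apply computable_zero.
    - apply computable_proj. }
  assert (Hsubr : computable B 2 (fun xs => nth 1 xs 0 - nth 0 xs 0)).
  { eapply computable_ext;
      [| apply (computable_prec 1 (fun xs => nth 0 xs 0) (fun xs => pred (nth 1 xs 0)))].
    - intros [|a [|b [|]]] H; try discriminate; simpl; clear H.
      induction a; simpl; [lia|]. rewrite IHa. lia.
    - apply computable_proj.
    - apply (computable_comp1 _ _ (fun xs => nth 1 xs 0) Hpred), computable_proj. }
  eapply computable_ext; [|apply (computable_comp2 k _ g2 g1 Hsubr)]; auto.
Qed.

Lemma computable_eqb k g1 g2 :
  computable B k g1 -> computable B k g2 ->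
  computable B k (fun xs => Nat.b2n (g1 xs =? g2 xs)).
Proof.
  intros H1 H2. eapply computable_ext;
    [| apply (computable_sub k (fun _ => 1) (fun xs => (g1 xs - g2 xs) + (g2 xs - g1 xs)))].
  - intros xs _; cbv beta. destruct (Nat.eqb_spec (g1 xs) (g2 xs)); cbn [Nat.b2n]; lia.
  - apply computable_const.
  - apply computable_add; apply computable_sub; auto.
Qed.

Lemma computable_ltb k g1 g2 :
  computable B k g1 -> computable B k g2 ->
  computable B k (fun xs => Nat.b2n (g1 xs <? g2 xs)).
Proof.
  intros H1 H2. eapply computable_ext;
    [| apply (computable_sub k (fun _ => 1) (fun xs => 1 - (g2 xs - g1 xs)))].
  - intros xs _; cbv beta. destruct (Nat.ltb_spec (g1 xs) (g2 xs)); cbn [Nat.b2n]; lia.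
  - apply computable_const.
  - apply computable_sub. apply computable_const. apply computable_sub; auto.
Qed.

Lemma computable_ite k c a b :
  computable B k c -> computable B k a -> computable B k b ->
  computable B k (fun xs => if c xs =? 0 then b xs else a xs).
Proof.
  intros Hc Ha Hb. eapply computable_ext;
    [| apply (computable_add k (fun xs => (1 - (1 - c xs)) * a xs) (fun xs => (1 - c xs) * b xs))].
  - intros xs _; cbv beta. destruct (c xs) eqn:E; cbn [Nat.eqb]; lia.
  - apply computable_mul; auto. apply computable_sub. apply computable_const.
    apply computable_sub; auto. apply computable_const.
  - apply computable_mul; auto. apply computable_sub; auto. apply computable_const.
Qed.

Lemma computable_reindex k m f idx : computable B m f -> length idx = m ->
  computable B k (fun xs => f (map (fun i => nth i xs 0) idx)).
Proof.
  intros Hf Hl. eapply computable_ext;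
    [| apply (computable_comp k m f (map (fun i xs => nth i xs 0) idx))]; auto.
  - intros xs _; cbv beta. f_equal. rewrite map_map. reflexivity.
  - apply Forall_forall. intros g Hg. apply in_map_iff in Hg as [i [<- _]]. apply computable_proj.
  - rewrite length_map; auto.
Qed.

Lemma computable_div2 k g : computable B k g -> computable B k (fun xs => Nat.div2 (g xs)).
Proof.
  intros Hg.
  assert (Hdiv2 : computable B 1 (fun xs => Nat.div2 (nth 0 xs 0))).
  { eapply computable_ext;
      [| apply (computable_min 1 (fun xs => nth 1 xs 0 - (2 * nth 0 xs 0 + 1)))].
    - intros [|n []] H; try discriminate. cbn [nth].
      pose proof (Nat.div2_odd n). apply least_unique.
      + destruct (Nat.odd n); simpl in *; lia.
      + intros m Hm. destruct (Nat.odd n); simpl in *; lia.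
    - apply computable_sub. apply computable_proj. apply computable_add.
      apply computable_mul. apply computable_const. apply computable_proj. apply computable_const.
    - intros [|n []] H; try discriminate. exists n. simpl. lia. }
  apply (computable_comp1 k _ g Hdiv2 Hg).
Qed.

Lemma computable_pair k g1 g2 :
  computable B k g1 -> computable B k g2 -> computable B k (fun xs => pair (g1 xs) (g2 xs)).
Proof.
  intros H1 H2. unfold pair.
  eapply computable_ext; [| apply computable_add; [apply computable_div2, computable_mul | apply H2]].
  - intros xs _; cbv beta. rewrite Nat.div2_div. reflexivity.
  - apply computable_add; assumption.
  - apply computable_add; [apply computable_add; assumption | apply computable_const].
Qed.

Fixpoint bounded_ex (f : list nat -> nat) (n : nat) (xs : list nat) : nat :=
  match n with
  | 0 => 0
  | S n => if f (n :: xs) =? 0 then bounded_ex f n xs else 1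
  end.

Lemma bounded_ex_spec f n xs : bounded_ex f n xs <> 0 <-> exists j, j < n /\ f (j :: xs) <> 0.
Proof.
  induction n; simpl.
  - split; [lia| intros [j [Hj _]]; lia].
  - destruct (Nat.eqb_spec (f (n :: xs)) 0).
    + rewrite IHn. split; intros [j [Hj Hf]]; exists j; split; auto.
      destruct (Nat.eq_dec j n); subst; auto; lia.
    + split; [intros _; exists n; auto|lia].
Qed.

Lemma skipn_nth_cons (ys : list nat) s :
  s < length ys -> skipn s ys = nth s ys 0 :: skipn (S s) ys.
Proof.
  revert s; induction ys; intros s Hs; simpl in *. lia.
  destruct s; simpl; auto. apply IHys; lia.
Qed.

Lemma map_nth_seq_skipn (ys : list nat) n s : n + s = length ys ->
  map (fun i => nth i ys 0) (seq s n) = skipn s ys.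
Proof.
  revert s; induction n; intros s Hs; simpl.
  - rewrite skipn_all2; auto; lia.
  - rewrite (skipn_nth_cons ys s); [|lia]. f_equal. apply IHn; lia.
Qed.

Lemma computable_bounded_ex k f :
  computable B (S k) f -> computable B (S k) (fun xs => bounded_ex f (hd 0 xs) (tl xs)).
Proof.
  intros Hf.
  eapply computable_ext; [| apply (computable_prec k (fun _ => 0)
     (fun ys => if f (nth 0 ys 0 :: skipn 2 ys) =? 0 then nth 1 ys 0 else 1))].
  - intros [|n xs] H; try discriminate. simpl. clear H. induction n; simpl; auto.
    rewrite IHn. reflexivity.
  - apply computable_zero.
  - apply computable_ite. 2: apply computable_const. 2: apply computable_proj.
    eapply computable_ext; [| apply (computable_reindex (S (S k)) (S k) f (0 :: seq 2 k)); auto].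
    + intros ys Hl. cbv beta. f_equal. simpl. f_equal. apply map_nth_seq_skipn. lia.
    + simpl. rewrite length_seq. reflexivity.
Qed.
End Computable.

Definition tri s := s * (s + 1) / 2.

Lemma tri_S s : tri (S s) = tri s + S s.
Proof.
  unfold tri. replace (S s * (S s + 1)) with (s * (s + 1) + S s * 2) by lia.
  rewrite Nat.div_add by lia. reflexivity.
Qed.

Lemma tri_ge s : s <= tri s.
Proof. induction s; [simpl; lia|rewrite tri_S; lia]. Qed.

Lemma tri_lt_mono s s' : s < s' -> tri s + s < tri s'.
Proof. induction 1; rewrite tri_S; lia. Qed.

Lemma pair_inj a b a' b' : pair a b = pair a' b' -> a = a' /\ b = b'.
Proof.
  change (tri (a + b) + b = tri (a' + b') + b' -> a = a' /\ b = b'). intros H.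
  destruct (lt_eq_lt_dec (a + b) (a' + b')) as [[Hl|He]|Hl].
  - pose proof (tri_lt_mono _ _ Hl). lia.
  - rewrite He in H. lia.
  - pose proof (tri_lt_mono _ _ Hl). lia.
Qed.

Lemma pair_ge_l a b : a <= pair a b.
Proof. change (a <= tri (a + b) + b). pose proof (tri_ge (a + b)). lia. Qed.

(** * Satisfaction *)

Section Satisfaction.
Variable M : structure.

Lemma teval_agree k c r r' t : tbound k t -> (forall i, i < k -> r i = r' i) ->
  teval M c r t = teval M c r' t.
Proof. induction t; simpl; intros; intuition; f_equal; auto. Qed.

Lemma sat_agree p : forall k c r r', fbound k p -> (forall i, i < k -> r i = r' i) ->
  (sat M c r p <-> sat M c r' p).
Proof.
  induction p; simpl; intros k c r r' Hb Hr.
  - rewrite (teval_agree k c r r' t), (teval_agree k c r r' u); tauto.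
  - rewrite (teval_agree k c r r' t), (teval_agree k c r r' u); tauto.
  - tauto.
  - rewrite (IHp1 k c r r'), (IHp2 k c r r'); tauto.
  - assert (Hr' : forall a i, i < S k -> scons a r i = scons a r' i).
    { intros a [|i] Hi; simpl; auto. apply Hr; lia. }
    split; intros H a; apply (IHp (S k) c (scons a r) (scons a r') Hb (Hr' a)), H.
Qed.

Lemma teval_ext c r r' t : (forall i, r i = r' i) -> teval M c r t = teval M c r' t.
Proof. induction t; simpl; intros; f_equal; auto. Qed.

Lemma sat_ext p : forall c r r', (forall i, r i = r' i) -> (sat M c r p <-> sat M c r' p).
Proof.
  induction p; simpl; intros c r r' Hr.
  - rewrite (teval_ext c r r' t), (teval_ext c r r' u); tauto.
  - rewrite (teval_ext c r r' t), (teval_ext c r r' u); tauto.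
  - tauto.
  - rewrite (IHp1 c r r'), (IHp2 c r r'); tauto.
  - assert (Hr' : forall a i, scons a r i = scons a r' i) by (intros a [|i]; simpl; auto).
    split; intros H a; apply (IHp c (scons a r) (scons a r') (Hr' a)), H.
Qed.

Lemma teval_pure c c' r t : (forall k, ~ tconst k t) -> teval M c r t = teval M c' r t.
Proof.
  induction t; simpl; intros H; auto.
  - exfalso; apply (H k); auto.
  - f_equal; [apply IHt1|apply IHt2]; intros k Hk; apply (H k); auto.
  - f_equal; [apply IHt1|apply IHt2]; intros k Hk; apply (H k); auto.
Qed.

Lemma sat_pure p : forall c c' r, pure p -> (sat M c r p <-> sat M c' r p).
Proof.
  unfold pure. induction p; simpl; intros c c' r Hp.
  - rewrite (teval_pure c c' r t), (teval_pure c c' r u); try tauto; intros k Hk; apply (Hp k); auto.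
  - rewrite (teval_pure c c' r t), (teval_pure c c' r u); try tauto; intros k Hk; apply (Hp k); auto.
  - tauto.
  - rewrite (IHp1 c c' r), (IHp2 c c' r); try tauto; intros k Hk; apply (Hp k); auto.
  - split; intros H a; [rewrite <- (IHp c c')|rewrite (IHp c c')]; auto.
Qed.

Lemma sat_nall k : forall c r q, sat M c r (nall k q) <->
  forall s : nat -> M, sat M c (fun i => if i <? k then s i else r (i - k)) q.
Proof.
  induction k; intros c r q; simpl.
  - split.
    + intros H s. rewrite sat_ext; [exact H|]. intros i; simpl. f_equal; lia.
    + intros H. specialize (H r). rewrite sat_ext; [exact H|]. intros i; simpl. f_equal; lia.
  - split.
    + intros H s. specialize (H (s k)). rewrite IHk in H. specialize (H s).
      rewrite sat_ext; [exact H|]. intros i; simpl.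
      destruct (Nat.ltb_spec i k), (Nat.ltb_spec i (S k)); try lia; auto.
      assert (i = k) by lia; subst; rewrite Nat.sub_diag; reflexivity.
      replace (i - k) with (S (i - S k)) by lia. reflexivity.
    + intros H a. rewrite IHk. intros s. specialize (H (fun i => if i <? k then s i else a)).
      rewrite sat_ext; [exact H|]. intros i; simpl.
      destruct (Nat.ltb_spec i k), (Nat.ltb_spec i (S k)); try lia; auto.
      replace (i - k) with 0 by lia. reflexivity.
      replace (i - k) with (S (i - S k)) by lia. reflexivity.
Qed.

Lemma sat_and c r p q : sat M c r (fAnd p q) <-> sat M c r p /\ sat M c r q.
Proof.
  simpl. split.
  - intros H. destruct (classic (sat M c r p)), (classic (sat M c r q)); tauto.
  - tauto.
Qed.

Lemma sat_ex c r q : sat M c r (fEx q) <-> exists a, sat M c (scons a r) q.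
Proof.
  simpl. split.
  - intros H. apply NNPP. intros Hn. apply H. intros a Ha. apply Hn. exists a; auto.
  - intros [a Ha] H. apply (H a Ha).
Qed.
End Satisfaction.

Lemma tbound_mono t : forall k k', k <= k' -> tbound k t -> tbound k' t.
Proof. induction t; simpl; intros; intuition eauto. lia. Qed.

Lemma fbound_mono p : forall k k', k <= k' -> fbound k p -> fbound k' p.
Proof.
  induction p; simpl; intros k k' Hk H; intuition eauto using tbound_mono.
  apply (IHp (S k)); auto; lia.
Qed.

Lemma tbound_exists t : exists k, tbound k t.
Proof.
  induction t; simpl; try (exists 0; auto; fail).
  - exists (S n); lia.
  - destruct IHt1 as [a Ha], IHt2 as [b Hb]. exists (a + b).
    split; [apply (tbound_mono t1 a)|apply (tbound_mono t2 b)]; auto; lia.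
  - destruct IHt1 as [a Ha], IHt2 as [b Hb]. exists (a + b).
    split; [apply (tbound_mono t1 a)|apply (tbound_mono t2 b)]; auto; lia.
Qed.

Lemma fbound_exists p : exists k, fbound k p.
Proof.
  induction p; simpl; try (exists 0; auto; fail).
  - destruct (tbound_exists t) as [a Ha], (tbound_exists u) as [b Hb]. exists (a + b).
    split; [apply (tbound_mono t a)|apply (tbound_mono u b)]; auto; lia.
  - destruct (tbound_exists t) as [a Ha], (tbound_exists u) as [b Hb]. exists (a + b).
    split; [apply (tbound_mono t a)|apply (tbound_mono u b)]; auto; lia.
  - destruct IHp1 as [a Ha], IHp2 as [b Hb]. exists (a + b).
    split; [apply (fbound_mono p1 a)|apply (fbound_mono p2 b)]; auto; lia.
  - destruct IHp as [a Ha]. exists a. apply (fbound_mono p a); auto.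
Qed.

Lemma gnt_inj t : forall u, gnt t = gnt u -> t = u.
Proof.
  induction t; intros [] H; simpl in H; apply pair_inj in H as [H1 H2]; try discriminate;
    try (f_equal; auto; fail);
    try (apply pair_inj in H2 as [H2 H3]; f_equal; auto).
Qed.

Lemma gn_inj p : forall q, gn p = gn q -> p = q.
Proof.
  induction p; intros [] H; simpl in H; apply pair_inj in H as [H1 H2]; try discriminate;
    try (f_equal; auto; fail);
    try (apply pair_inj in H2 as [H2 H3]; f_equal; auto using gnt_inj).
Qed.

Lemma pure_imp p q : pure (fImp p q) -> pure p /\ pure q.
Proof. intros H; split; intros k Hk; apply (H k); simpl; auto. Qed.

Lemma pure_all p : pure (fAll p) -> pure p.
Proof. intros H k Hk; apply (H k); simpl; auto. Qed.

Lemma pure_neg p : pure p -> pure (fNeg p).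
Proof. intros H k Hk; simpl in Hk. apply (H k); tauto. Qed.

Lemma pure_ex p : pure p -> pure (fEx p).
Proof. intros H k Hk; simpl in Hk. apply (H k); tauto. Qed.

(* [close_consts [c_0; ..; c_(k-1)] p] is [forall x_0 .. x_(k-1), x_0 = c_0 -> .. -> p];
   the elementary diagram decides it exactly when [p] holds of the elements named [c_i]. *)
Fixpoint impl_consts (i : nat) (cs : list nat) (p : form) : form :=
  match cs with
  | [] => p
  | c :: cs => fImp (fEq (tVar i) (tConst c)) (impl_consts (S i) cs p)
  end.

Definition close_consts (cs : list nat) (p : form) : form := nall (length cs) (impl_consts 0 cs p).

Lemma sat_impl_consts M c r p cs : forall i,
  sat M c r (impl_consts i cs p) <->
  ((forall j, j < length cs -> r (i + j) = c (nth j cs 0)) -> sat M c r p).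
Proof.
  induction cs as [|c0 cs IH]; intros i; simpl.
  - split; auto. intros H; apply H; intros; lia.
  - rewrite IH. split.
    + intros H Hj. apply H. specialize (Hj 0). rewrite Nat.add_0_r in Hj. apply Hj; lia.
      intros j Hjl. replace (S i + j) with (i + S j) by lia. apply (Hj (S j)); lia.
    + intros H H0 Hj. apply H. intros [|j] Hjl. rewrite Nat.add_0_r; auto.
      replace (i + S j) with (S i + j) by lia. apply Hj; lia.
Qed.

Lemma sat_close_consts M c r cs p : fbound (length cs) p ->
  (sat M c r (close_consts cs p) <-> sat M c (fun i => c (nth i cs 0)) p).
Proof.
  intros Hb. unfold close_consts. rewrite sat_nall. split.
  - intros H. specialize (H (fun i => c (nth i cs 0))). rewrite sat_impl_consts in H.
    rewrite sat_agree; [apply H| exact Hb|].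
    + intros j Hj; simpl. destruct (Nat.ltb_spec j (length cs)); [reflexivity|lia].
    + intros i Hi; simpl. destruct (Nat.ltb_spec i (length cs)); [reflexivity|lia].
  - intros H s. rewrite sat_impl_consts. intros Hj. rewrite sat_agree; [apply H|exact Hb|].
    intros i Hi. simpl in *. rewrite <- Hj; auto.
Qed.

Lemma fbound_nall k : forall q m, fbound m (nall k q) <-> fbound (k + m) q.
Proof.
  induction k; intros q m; simpl. tauto.
  rewrite IHk. replace (k + S m) with (S (k + m)) by lia. tauto.
Qed.

Lemma fbound_impl_consts cs : forall i p,
  fbound (i + length cs) p -> fbound (i + length cs) (impl_consts i cs p).
Proof.
  induction cs as [|c0 cs IH]; intros i p H; simpl in *; auto.
  split; [split; simpl; auto; lia|].
  replace (i + S (length cs)) with (S i + length cs) in * by lia.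
  apply IH; auto.
Qed.

Lemma sentence_close_consts cs p : fbound (length cs) p -> sentence (close_consts cs p).
Proof.
  intros H. unfold sentence, close_consts. apply fbound_nall. rewrite Nat.add_0_r.
  apply (fbound_impl_consts cs 0); auto.
Qed.

Lemma fconst_nall k : forall q j, fconst j (nall k q) <-> fconst j q.
Proof. induction k; intros; simpl; auto. tauto. Qed.

Lemma fconst_impl_consts cs : forall i p j,
  fconst j (impl_consts i cs p) -> In j cs \/ fconst j p.
Proof.
  induction cs as [|c0 cs IH]; intros i p j H; simpl in *; auto.
  destruct H as [[[]|H]|H]. subst; auto. destruct (IH _ _ _ H); auto.
Qed.

Lemma fconst_close_consts cs p j : pure p -> fconst j (close_consts cs p) -> In j cs.
Proof.
  intros Hp H. unfold close_consts in H. rewrite fconst_nall in H.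
  destruct (fconst_impl_consts _ _ _ _ H); auto.
  exfalso; eapply Hp; eauto.
Qed.

Fixpoint impl_consts_code (i : nat) (cs : list nat) (g : nat) : nat :=
  match cs with
  | [] => g
  | c :: cs => pair 3 (pair (pair 0 (pair (pair 0 i) (pair 1 c))) (impl_consts_code (S i) cs g))
  end.

Lemma gn_impl_consts cs : forall i p, gn (impl_consts i cs p) = impl_consts_code i cs (gn p).
Proof. induction cs; intros; simpl; auto. Qed.

Lemma gn_close_consts cs p :
  gn (close_consts cs p) = Nat.iter (length cs) (pair 4) (impl_consts_code 0 cs (gn p)).
Proof.
  assert (Hnall : forall k q, gn (nall k q) = Nat.iter k (pair 4) (gn q)).
  { induction k; intros; simpl; f_equal; auto. }
  unfold close_consts. rewrite Hnall, gn_impl_consts. reflexivity.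
Qed.

Definition fTrue := fImp fFalse fFalse.

Definition type_codes (P : form -> Prop) (j : nat) : Prop := exists p, P p /\ gn p = j.

Definition type_decode (P : form -> Prop) (j : nat) : form :=
  epsilon (inhabits fFalse) (fun p => P p /\ gn p = j).

Lemma type_decode_spec P j : type_codes P j -> P (type_decode P j) /\ gn (type_decode P j) = j.
Proof. apply (epsilon_spec (inhabits fFalse) (fun p => P p /\ gn p = j)). Qed.

Lemma type_fragment_finite (P : form -> Prop) m :
  exists L, forall q, In q L <-> P q /\ gn q < m.
Proof.
  induction m as [|m [L HL]].
  - exists []. intros q; simpl; split; [tauto|lia].
  - destruct (classic (type_codes P m)) as [Hm|Hm].
    + destruct (type_decode_spec P m Hm) as [HPm Hgm].
      exists (type_decode P m :: L). intros q. simpl. rewrite HL. split.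
      * intros [<-|[H1 H2]]; split; auto; lia.
      * intros [H1 H2]. destruct (Nat.eq_dec (gn q) m) as [E|E]; [left|right; split; auto; lia].
        apply gn_inj. congruence.
    + exists L. intros q. rewrite HL. split; [intros [H1 H2]; split; auto; lia|].
      intros [H1 H2]. split; auto. destruct (Nat.eq_dec (gn q) m); [|lia].
      exfalso; apply Hm. exists q; auto.
Qed.

Fixpoint type_conj (P : form -> Prop) (m : nat) : form :=
  match m with
  | 0 => fTrue
  | S j => if excluded_middle_informative (type_codes P j)
           then fAnd (type_decode P j) (type_conj P j) else type_conj P j
  end.

Lemma pure_type_conj P m : (forall p, P p -> pure p) -> pure (type_conj P m).
Proof.
  intros H. induction m; simpl.
  - intros k Hk; simpl in Hk; tauto.
  - destruct excluded_middle_informative as [h|h]; auto.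
    intros k Hk. simpl in Hk. destruct Hk as [[Hk|[Hk|[]]]|[]].
    + apply (H _ (proj1 (type_decode_spec P m h)) k Hk).
    + apply (IHm k Hk).
Qed.

Lemma fbound_type_conj P m k : (forall p, P p -> fbound k p) -> fbound k (type_conj P m).
Proof.
  intros H. induction m; simpl.
  - unfold fTrue; simpl; auto.
  - destruct excluded_middle_informative as [h|h]; auto. simpl.
    repeat split; auto. apply H, type_decode_spec, h.
Qed.

Lemma sat_type_conj (M : structure) c r P m :
  sat M c r (type_conj P m) <-> forall p, P p -> gn p < m -> sat M c r p.
Proof.
  induction m; cbn [type_conj].
  - split; [intros _ p _ Hp; lia| intros _ h; exact h].
  - destruct excluded_middle_informative as [h|h].
    + destruct (type_decode_spec P m h) as [HPm Hgm].
      rewrite sat_and, IHm. split.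
      * intros [H1 H2] p Hp Hgp. destruct (Nat.eq_dec (gn p) m) as [E|E].
        -- replace p with (type_decode P m) by (apply gn_inj; congruence). exact H1.
        -- apply H2; auto; lia.
      * intros H; split; [apply H; auto; lia|]. intros p Hp Hgp; apply H; auto.
    + rewrite IHm. split; intros H p Hp Hgp; apply H; auto.
      destruct (Nat.eq_dec (gn p) m); [|lia]. exfalso; apply h. exists p; auto.
Qed.

Definition and_code a b := pair 3 (pair (pair 3 (pair a (pair 3 (pair b (pair 2 0))))) (pair 2 0)).
Definition ex_code g := pair 3 (pair (pair 4 (pair 3 (pair g (pair 2 0)))) (pair 2 0)).

Fixpoint type_conj_code (e : nat -> nat) (m : nat) : nat :=
  match m with
  | 0 => gn fTrue
  | S j => if e j =? 0 then type_conj_code e j else and_code j (type_conj_code e j)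
  end.

Lemma gn_type_conj P m : gn (type_conj P m) = type_conj_code (chi (type_codes P)) m.
Proof.
  induction m; cbn [type_conj type_conj_code]; auto.
  destruct excluded_middle_informative as [h|h].
  - rewrite chi_true by auto. cbn [Nat.eqb].
    change (and_code (gn (type_decode P m)) (gn (type_conj P m)) =
            and_code m (type_conj_code (chi (type_codes P)) m)).
    rewrite (proj2 (type_decode_spec P m h)), IHm; auto.
  - rewrite chi_false by auto. cbn [Nat.eqb]. auto.
Qed.

Fixpoint last_nonzero (e : nat -> nat) (j : nat) : nat :=
  match j with
  | 0 => 0
  | S j' => if e (S j') =? 0 then last_nonzero e j' else S j'
  end.

Lemma last_nonzero_ge e j m : 0 < m -> m <= j -> e m <> 0 -> m <= last_nonzero e j.
Proof.
  induction j; simpl; intros H0 H1 H2. lia.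
  destruct (Nat.eqb_spec (e (S j)) 0).
  - destruct (Nat.eq_dec m (S j)); subst; [tauto|]. apply IHj; auto; lia.
  - lia.
Qed.

Lemma last_nonzero_spec e j : last_nonzero e j = 0 \/ e (last_nonzero e j) <> 0.
Proof. induction j; simpl; auto. destruct (Nat.eqb_spec (e (S j)) 0); auto. Qed.

Lemma last_nonzero_ext e e' j :
  (forall m, e m = 0 <-> e' m = 0) -> last_nonzero e j = last_nonzero e' j.
Proof.
  intros H. induction j; simpl; auto.
  destruct (Nat.eqb_spec (e (S j)) 0), (Nat.eqb_spec (e' (S j)) 0); auto;
    exfalso; rewrite H in *; tauto.
Qed.

(** * Computability relative to a Scott set *)

Section ScottSet.
Variable X : (nat -> Prop) -> Prop.
Hypothesis HX : scott_set X.

Lemma X_of_computable J A : X J -> computable J 1 (fun xs => chi A (nth 0 xs 0)) -> X A.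
Proof.
  intros HJ [c Hc]. destruct HX as [_ [_ [_ [Ht _]]]]. apply (Ht A J HJ).
  exists c. intros n. specialize (Hc [n] eq_refl). simpl in Hc. split; intros Hn.
  - rewrite chi_true in Hc; auto.
  - rewrite chi_false in Hc; auto.
Qed.

Definition Xcomputable k f := exists J, X J /\ computable J k f.

Lemma X_of_Xcomputable A : Xcomputable 1 (fun xs => chi A (nth 0 xs 0)) -> X A.
Proof. intros [J [HJ Hc]]. eapply X_of_computable; eauto. Qed.

Lemma Xcomputable_of_X A : X A -> Xcomputable 1 (fun xs => chi A (nth 0 xs 0)).
Proof. intros HA. exists A; split; auto. apply computable_oracle. Qed.

Lemma Xcomputable_of_computable k f : (forall B, computable B k f) -> Xcomputable k f.
Proof. intros H. destruct HX as [[A HA] _]. exists A; auto. Qed.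

Lemma X_ext A A' : X A -> (forall n, A n <-> A' n) -> X A'.
Proof.
  intros HA H. apply X_of_Xcomputable. destruct (Xcomputable_of_X A HA) as [J [HJ Hc]].
  exists J; split; auto.
  eapply computable_ext; [|exact Hc]. intros xs _. unfold chi.
  destruct excluded_middle_informative; destruct excluded_middle_informative; firstorder.
Qed.

Lemma X_union A A' : X A -> X A' -> X (fun n => A n \/ A' n).
Proof. destruct HX as [_ [H _]]. apply H. Qed.

Lemma X_compl A : X A -> X (fun n => ~ A n).
Proof. destruct HX as [_ [_ [H _]]]. apply H. Qed.

Lemma X_inter A A' : X A -> X A' -> X (fun n => A n /\ A' n).
Proof.
  intros H1 H2. apply (X_ext (fun n => ~ (~ A n \/ ~ A' n))).
  - apply X_compl, X_union; apply X_compl; auto.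
  - intros n; destruct (classic (A n)), (classic (A' n)); tauto.
Qed.

Lemma X_full : X (fun _ => True).
Proof.
  destruct HX as [[A HA] _]. apply (X_ext (fun n => A n \/ ~ A n)).
  - apply X_union; auto. apply X_compl; auto.
  - intros n; split; auto. intros _; apply classic.
Qed.

Lemma X_empty : X (fun _ => False).
Proof. apply (X_ext (fun n => ~ True)). apply X_compl, X_full. intros; tauto. Qed.

Lemma X_of_recursive A : recursive A -> X A.
Proof. destruct HX as [_ [_ [_ [Ht _]]]]. intros HA. exact (Ht _ _ X_empty HA). Qed.

Definition turing_join (A A' : nat -> Prop) (m : nat) : Prop :=
  (m = 2 * Nat.div2 m /\ A (Nat.div2 m)) \/ (m <> 2 * Nat.div2 m /\ A' (Nat.div2 m)).

Lemma X_turing_join A A' : X A -> X A' -> X (turing_join A A').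
Proof.
  intros HA HA'.
  assert (Heven : forall B,
    computable B 1 (fun xs => Nat.b2n (nth 0 xs 0 =? 2 * Nat.div2 (nth 0 xs 0)))).
  { intros B. apply computable_eqb; [apply computable_proj|].
    apply computable_mul; [apply computable_const|apply computable_div2, computable_proj]. }
  assert (Hhalf : forall B, computable B 1 (fun xs => chi B (Nat.div2 (nth 0 xs 0)))).
  { intros B. apply (computable_comp1 B 1 (fun xs => chi B (nth 0 xs 0))).
    apply computable_oracle. apply computable_div2, computable_proj. }
  apply X_union; [apply (X_of_computable A)|apply (X_of_computable A')]; auto.
  - eapply computable_ext; [|apply computable_mul; [apply Heven|apply Hhalf]].
    intros xs _; unfold chi. destruct (Nat.eqb_spec (nth 0 xs 0) (2 * Nat.div2 (nth 0 xs 0)));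
      cbn [Nat.b2n nth]; repeat destruct excluded_middle_informative; tauto || lia.
  - eapply computable_ext;
      [|apply computable_mul;
          [apply computable_sub; [apply (computable_const _ _ 1)|apply Heven]|apply Hhalf]].
    intros xs _; unfold chi. destruct (Nat.eqb_spec (nth 0 xs 0) (2 * Nat.div2 (nth 0 xs 0)));
      cbn [Nat.b2n nth]; repeat destruct excluded_middle_informative; tauto || lia.
Qed.

Lemma computable_turing_join_l A A' :
  computable (turing_join A A') 1 (fun xs => chi A (nth 0 xs 0)).
Proof.
  eapply computable_ext; [| apply (computable_comp1 _ 1
    (fun xs => chi (turing_join A A') (nth 0 xs 0)) (fun xs => 2 * nth 0 xs 0))].
  - intros xs _; cbv beta; cbn [nth]. unfold chi, turing_join. rewrite Nat.div2_double.
    repeat destruct excluded_middle_informative; tauto.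
  - apply computable_oracle.
  - apply computable_mul. apply computable_const. apply computable_proj.
Qed.

Lemma computable_turing_join_r A A' :
  computable (turing_join A A') 1 (fun xs => chi A' (nth 0 xs 0)).
Proof.
  eapply computable_ext; [| apply (computable_comp1 _ 1
    (fun xs => chi (turing_join A A') (nth 0 xs 0)) (fun xs => S (2 * nth 0 xs 0)))].
  - intros xs _; cbv beta; cbn [nth]. unfold chi, turing_join. rewrite Nat.div2_succ_double.
    repeat destruct excluded_middle_informative; try tauto; try lia; exfalso; intuition lia.
  - apply computable_oracle.
  - apply computable_S. apply computable_mul. apply computable_const. apply computable_proj.
Qed.

(* Any two oracles in [X] are reducible to their join, which is again in [X]. *)
Lemma Xcomputable_common_oracle k f m g : Xcomputable k f -> Xcomputable m g ->
  exists J, X J /\ computable J k f /\ computable J m g.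
Proof.
  intros [J1 [H1 C1]] [J2 [H2 C2]]. exists (turing_join J1 J2).
  split; [apply X_turing_join; auto|].
  split; eapply computable_relativize; eauto.
  apply computable_turing_join_l. apply computable_turing_join_r.
Qed.

Lemma Xcomputable_comp k m f gs :
  Xcomputable m f -> Forall (Xcomputable k) gs -> length gs = m ->
  Xcomputable k (fun xs => f (map (fun g => g xs) gs)).
Proof.
  intros Hf HF Hl.
  assert (exists J, X J /\ computable J m f /\ Forall (computable J k) gs) as [J [HJ [Cf Cg]]].
  { clear Hl. induction HF as [|g gs Hg _ IH].
    - destruct Hf as [J [HJ Cf]]. exists J; auto.
    - destruct IH as [J [HJ [Cf Cgs]]]. destruct Hg as [J2 [HJ2 Cg]].
      exists (turing_join J J2). split; [apply X_turing_join; auto|]. split.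
      + eapply computable_relativize; eauto. apply computable_turing_join_l.
      + constructor. eapply computable_relativize; eauto. apply computable_turing_join_r.
        eapply Forall_impl; [|exact Cgs]. intros h Hh.
        eapply computable_relativize; eauto. apply computable_turing_join_l. }
  exists J; split; auto. apply computable_comp with (m := m); auto.
Qed.

Lemma Xcomputable_ext k f g :
  (forall xs, length xs = k -> f xs = g xs) -> Xcomputable k f -> Xcomputable k g.
Proof. intros H [J [HJ C]]; exists J; split; auto. eapply computable_ext; eauto. Qed.

Lemma Xcomputable_comp1 k f g :
  Xcomputable 1 f -> Xcomputable k g -> Xcomputable k (fun xs => f [g xs]).
Proof. intros Hf Hg. apply (Xcomputable_comp k 1 f [g]); auto. Qed.

Lemma Xcomputable_comp2 k f g1 g2 : Xcomputable 2 f -> Xcomputable k g1 -> Xcomputable k g2 ->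
  Xcomputable k (fun xs => f [g1 xs; g2 xs]).
Proof. intros Hf H1 H2. apply (Xcomputable_comp k 2 f [g1; g2]); auto. Qed.

Lemma Xcomputable_op2 k (op : nat -> nat -> nat) g1 g2 :
  (forall B, computable B 2 (fun xs => op (nth 0 xs 0) (nth 1 xs 0))) ->
  Xcomputable k g1 -> Xcomputable k g2 -> Xcomputable k (fun xs => op (g1 xs) (g2 xs)).
Proof.
  intros Hop H1 H2. eapply Xcomputable_ext;
    [| apply (Xcomputable_comp2 k (fun xs => op (nth 0 xs 0) (nth 1 xs 0)) g1 g2); auto].
  - intros xs _; reflexivity.
  - apply Xcomputable_of_computable. apply Hop.
Qed.

Lemma Xcomputable_add k g1 g2 :
  Xcomputable k g1 -> Xcomputable k g2 -> Xcomputable k (fun xs => g1 xs + g2 xs).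
Proof. apply (Xcomputable_op2 k Nat.add). intros. apply computable_add; apply computable_proj. Qed.

Lemma Xcomputable_mul k g1 g2 :
  Xcomputable k g1 -> Xcomputable k g2 -> Xcomputable k (fun xs => g1 xs * g2 xs).
Proof. apply (Xcomputable_op2 k Nat.mul). intros. apply computable_mul; apply computable_proj. Qed.

Lemma Xcomputable_sub k g1 g2 :
  Xcomputable k g1 -> Xcomputable k g2 -> Xcomputable k (fun xs => g1 xs - g2 xs).
Proof. apply (Xcomputable_op2 k Nat.sub). intros. apply computable_sub; apply computable_proj. Qed.

Lemma Xcomputable_pair k g1 g2 :
  Xcomputable k g1 -> Xcomputable k g2 -> Xcomputable k (fun xs => pair (g1 xs) (g2 xs)).
Proof. apply (Xcomputable_op2 k pair). intros. apply computable_pair; apply computable_proj. Qed.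

Lemma Xcomputable_eqb k g1 g2 : Xcomputable k g1 -> Xcomputable k g2 ->
  Xcomputable k (fun xs => Nat.b2n (g1 xs =? g2 xs)).
Proof.
  apply (Xcomputable_op2 k (fun a b => Nat.b2n (a =? b))).
  intros. apply computable_eqb; apply computable_proj.
Qed.

Lemma Xcomputable_ltb k g1 g2 : Xcomputable k g1 -> Xcomputable k g2 ->
  Xcomputable k (fun xs => Nat.b2n (g1 xs <? g2 xs)).
Proof.
  apply (Xcomputable_op2 k (fun a b => Nat.b2n (a <? b))).
  intros. apply computable_ltb; apply computable_proj.
Qed.

Lemma Xcomputable_const k c : Xcomputable k (fun _ => c).
Proof. apply Xcomputable_of_computable. intros; apply computable_const. Qed.

Lemma Xcomputable_proj k i : Xcomputable k (fun xs => nth i xs 0).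
Proof. apply Xcomputable_of_computable. intros; apply computable_proj. Qed.

Lemma Xcomputable_ite k c a b : Xcomputable k c -> Xcomputable k a -> Xcomputable k b ->
  Xcomputable k (fun xs => if c xs =? 0 then b xs else a xs).
Proof.
  intros Hc Ha Hb. eapply Xcomputable_ext;
    [| apply (Xcomputable_add k (fun xs => (1 - (1 - c xs)) * a xs) (fun xs => (1 - c xs) * b xs))].
  - intros xs _. destruct (c xs) eqn:E; cbn [Nat.eqb]; lia.
  - apply Xcomputable_mul; auto. repeat apply Xcomputable_sub; auto; apply Xcomputable_const.
  - apply Xcomputable_mul; auto. apply Xcomputable_sub; auto. apply Xcomputable_const.
Qed.

Lemma Xcomputable_prec k f g : Xcomputable k f -> Xcomputable (S (S k)) g ->
  Xcomputable (S k) (fun xs => prim_rec f g (hd 0 xs) (tl xs)).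
Proof.
  intros Hf Hg. destruct (Xcomputable_common_oracle _ _ _ _ Hf Hg) as [J [HJ [C1 C2]]].
  exists J; split; auto. apply computable_prec; auto.
Qed.

Lemma Xcomputable_min k f : Xcomputable (S k) f ->
  (forall xs, length xs = k -> exists n, f (n :: xs) = 0) ->
  Xcomputable k (fun xs => least (fun n => f (n :: xs) = 0)).
Proof. intros [J [HJ C]] H. exists J; split; auto. apply computable_min; auto. Qed.

Lemma Xcomputable_bounded_ex k f :
  Xcomputable (S k) f -> Xcomputable (S k) (fun xs => bounded_ex f (hd 0 xs) (tl xs)).
Proof. intros [J [HJ C]]. exists J; split; auto. apply computable_bounded_ex; auto. Qed.

Lemma Xcomputable_chi k A g : X A -> Xcomputable k g -> Xcomputable k (fun xs => chi A (g xs)).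
Proof.
  intros HA Hg. apply (Xcomputable_comp1 k (fun xs => chi A (nth 0 xs 0))); auto.
  apply Xcomputable_of_X; auto.
Qed.

Lemma Xcomputable_arg m j (g : nat -> nat) :
  Xcomputable 1 (fun xs => g (nth 0 xs 0)) -> Xcomputable m (fun xs => g (nth j xs 0)).
Proof. intros Hg. apply (Xcomputable_comp1 m _ (fun xs => nth j xs 0) Hg), Xcomputable_proj. Qed.

Lemma X_of_test A (t : nat -> nat) : Xcomputable 1 (fun xs => t (nth 0 xs 0)) ->
  (forall n, A n <-> t n <> 0) -> X A.
Proof.
  intros Ht HA. apply X_of_Xcomputable.
  eapply Xcomputable_ext; [| apply (Xcomputable_sub 1 (fun _ => 1) (fun xs => 1 - t (nth 0 xs 0)))].
  - intros xs _. unfold chi. destruct excluded_middle_informative as [h|h]; rewrite HA in h; lia.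
  - apply Xcomputable_const.
  - apply Xcomputable_sub; [apply Xcomputable_const|exact Ht].
Qed.

Lemma Xcomputable_iter_pair k n G :
  Xcomputable k G -> Xcomputable k (fun xs => Nat.iter n (pair 4) (G xs)).
Proof.
  intros HG. induction n; simpl; auto.
  apply (Xcomputable_pair k (fun _ => 4)); auto. apply Xcomputable_const.
Qed.

Lemma Xcomputable_impl_consts_code N k (L : list nat -> list nat) G :
  (forall i, i < k -> Xcomputable N (fun xs => nth i (L xs) 0)) ->
  (forall xs, length xs = N -> length (L xs) = k) ->
  Xcomputable N G -> Xcomputable N (fun xs => impl_consts_code 0 (L xs) (G xs)).
Proof.
  intros HL Hlen HG.
  assert (H : forall d, d <= k ->
    Xcomputable N (fun xs => impl_consts_code (k - d) (skipn (k - d) (L xs)) (G xs))).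
  { induction d; intros Hd.
    - eapply Xcomputable_ext; [|exact HG]. intros xs Hl; simpl.
      rewrite Nat.sub_0_r, skipn_all2; auto. rewrite Hlen; auto.
    - eapply Xcomputable_ext; [|apply (Xcomputable_pair N (fun _ => 3));
        [apply Xcomputable_const|apply Xcomputable_pair; [|apply IHd; lia]]].
      + intros xs Hl. cbv beta.
        rewrite (skipn_nth_cons (L xs) (k - S d)) by (rewrite Hlen; auto; lia).
        cbn [impl_consts_code]. replace (S (k - S d)) with (k - d) by lia. reflexivity.
      + repeat apply Xcomputable_pair; try apply Xcomputable_const. apply HL; lia. }
  eapply Xcomputable_ext; [|apply (H k); auto]. intros xs Hl. rewrite Nat.sub_diag. reflexivity.
Qed.

Lemma Xcomputable_type_conj_code R :
  X R -> Xcomputable 1 (fun xs => type_conj_code (chi R) (nth 0 xs 0)).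
Proof.
  intros XR.
  eapply Xcomputable_ext; [| apply (Xcomputable_prec 0 (fun _ => gn fTrue)
     (fun ys => if chi R (nth 0 ys 0) =? 0 then nth 1 ys 0 else and_code (nth 0 ys 0) (nth 1 ys 0)))].
  - intros [|m []] H; try discriminate. simpl. clear H.
    induction m; simpl; auto. rewrite IHm. reflexivity.
  - apply Xcomputable_const.
  - apply Xcomputable_ite; [apply Xcomputable_chi, Xcomputable_proj; auto| |apply Xcomputable_proj].
    unfold and_code. repeat apply Xcomputable_pair; apply Xcomputable_const || apply Xcomputable_proj.
Qed.

Lemma Xcomputable_last_nonzero (e : nat -> nat -> nat) :
  Xcomputable 2 (fun xs => e (nth 0 xs 0) (nth 1 xs 0)) ->
  Xcomputable 1 (fun xs => last_nonzero (fun m => e m (nth 0 xs 0)) (nth 0 xs 0)).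
Proof.
  intros He.
  set (g := fun ys => if e (S (nth 0 ys 0)) (nth 2 ys 0) =? 0 then nth 1 ys 0 else S (nth 0 ys 0)).
  assert (Hg : Xcomputable 3 g).
  { assert (HS : Xcomputable 3 (fun ys => S (nth 0 ys 0))).
    { apply Xcomputable_of_computable. intros B. apply computable_S, computable_proj. }
    apply Xcomputable_ite; auto; [|apply Xcomputable_proj].
    apply (Xcomputable_comp2 3 _ (fun ys => S (nth 0 ys 0)) (fun ys => nth 2 ys 0) He HS).
    apply Xcomputable_proj. }
  eapply Xcomputable_ext; [|apply (Xcomputable_comp2 1 _ (fun xs => nth 0 xs 0) (fun xs => nth 0 xs 0)
    (Xcomputable_prec 1 (fun _ => 0) g (Xcomputable_const 1 0) Hg))];
    [|apply Xcomputable_proj|apply Xcomputable_proj].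
  intros [|n []] H; try discriminate. cbn [nth hd tl]. clear H.
  assert (Hj : forall j, prim_rec (fun _ => 0) g j [n] = last_nonzero (fun m => e m n) j).
  { induction j as [|j IH]; simpl; auto. unfold g at 1; simpl. rewrite IH. reflexivity. }
  apply Hj.
Qed.

(** * Models coded in a Scott set *)

Section CodedModel.
Variables (M : structure) (code : M -> nat).
Hypothesis Hinj : forall a b, code a = code b -> a = b.
Hypothesis HDom : X (cdomain M code).
Hypothesis HDiag : X (diagram M code).

Notation Dom := (cdomain M code).
Notation cv := (cval M code).

Lemma code_cval k : Dom k -> code (cv k) = k.
Proof.
  intros Hk. unfold cval. apply (epsilon_spec (inhabits (szero M)) (fun a => code a = k)). exact Hk.
Qed.

Lemma cval_code a : cv (code a) = a.
Proof. apply Hinj. apply code_cval. exists a; auto. Qed.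

Lemma diagram_close_consts cs p :
  pure p -> fbound (length cs) p -> (forall j, In j cs -> Dom j) ->
  (diagram M code (gn (close_consts cs p)) <-> psat M (fun i => cv (nth i cs 0)) p).
Proof.
  intros Hp Hb Hc. unfold diagram, psat. split.
  - intros [q [Hq [_ [_ Hs]]]]. apply gn_inj in Hq. subst q.
    rewrite sat_close_consts in Hs by auto. rewrite sat_pure; [exact Hs|auto].
  - intros H. exists (close_consts cs p). split; auto.
    split; [apply sentence_close_consts; auto|]. split.
    + intros j Hj. apply Hc. eapply fconst_close_consts; eauto.
    + rewrite sat_close_consts by auto. rewrite sat_pure; [exact H|auto].
Qed.

Lemma nth_map_seq (f : nat -> nat) k i : i < k -> nth i (map f (seq 0 k)) 0 = f i.
Proof.
  intros Hi. rewrite (nth_indep _ 0 (f 0)) by (rewrite length_map, length_seq; auto).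
  rewrite map_nth, seq_nth; auto.
Qed.

(* Query the elementary diagram of [M] on [close_consts [C 0 xs; ..] (Phi xs)]. *)
Lemma Xcomputable_sat m k (C : nat -> list nat -> nat) (G : list nat -> nat)
  (Phi : list nat -> form) :
  (forall xs, pure (Phi xs) /\ fbound k (Phi xs)) ->
  (forall i, i < k -> Xcomputable m (C i)) -> Xcomputable m G ->
  (forall xs, length xs = m -> G xs = gn (Phi xs)) ->
  exists t, Xcomputable m t /\ forall xs, length xs = m -> (forall i, i < k -> Dom (C i xs)) ->
     (t xs <> 0 <-> psat M (fun i => cv (C i xs)) (Phi xs)).
Proof.
  intros HPhi HC HG HGe.
  set (cs := fun xs => map (fun i => C i xs) (seq 0 k)).
  assert (Hcl : forall xs, length (cs xs) = k).
  { intros xs. unfold cs. rewrite length_map, length_seq; auto. }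
  assert (Hn : forall xs i, i < k -> nth i (cs xs) 0 = C i xs).
  { intros xs i Hi. apply (nth_map_seq (fun i => C i xs)); auto. }
  exists (fun xs => chi (diagram M code) (Nat.iter k (pair 4) (impl_consts_code 0 (cs xs) (G xs)))).
  split.
  - apply Xcomputable_chi; [auto|].
    apply Xcomputable_iter_pair, (Xcomputable_impl_consts_code m k); auto.
    intros i Hi. eapply Xcomputable_ext; [|apply (HC i Hi)]. intros xs _. symmetry; auto.
  - intros xs Hl HD. destruct (HPhi xs) as [Hp Hb].
    rewrite HGe, <- (Hcl xs), <- gn_close_consts by auto.
    assert (Hdiag : diagram M code (gn (close_consts (cs xs) (Phi xs))) <->
                    psat M (fun i => cv (C i xs)) (Phi xs)).
    { assert (Hcs : forall j, In j (cs xs) -> Dom j).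
      { intros j Hj. unfold cs in Hj. apply in_map_iff in Hj as [i [<- Hi]].
        apply in_seq in Hi. apply HD; lia. }
      rewrite diagram_close_consts; [|auto|rewrite Hcl; auto|auto].
      unfold psat. apply sat_agree with (k := k); [exact Hb|]. intros i Hi; rewrite Hn; auto. }
    unfold chi; destruct excluded_middle_informative; split; intros; tauto || lia.
Qed.

(* The paper's [prod_X M]: see [Xseq_of_inProd] and [inProd_of_Xseq]. *)
Definition Xseq (f : nat -> M) := Xcomputable 1 (fun xs => code (f (nth 0 xs 0))).

Lemma Xseq_ext f g : Xseq f -> (forall n, f n = g n) -> Xseq g.
Proof. intros H E. eapply Xcomputable_ext; [|exact H]. intros; cbv beta; rewrite E; auto. Qed.

Lemma Xseq_const a : Xseq (fun _ => a).
Proof. apply (Xcomputable_const 1 (code a)). Qed.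

Lemma Xcomputable_Xseq_arg m j f : Xseq f -> Xcomputable m (fun xs => code (f (nth j xs 0))).
Proof. apply (Xcomputable_arg m j (fun n => code (f n))). Qed.

Lemma Xcomputable_sat_seq k (F : nat -> nat -> M) (G : nat -> nat) (Phi : nat -> form) :
  (forall n, pure (Phi n) /\ fbound k (Phi n)) -> (forall i, i < k -> Xseq (F i)) ->
  Xcomputable 1 (fun xs => G (nth 0 xs 0)) -> (forall n, G n = gn (Phi n)) ->
  exists t, Xcomputable 1 (fun xs => t (nth 0 xs 0)) /\
    forall n, t n <> 0 <-> psat M (fun i => F i n) (Phi n).
Proof.
  intros HPhi HF HG HGe.
  destruct (Xcomputable_sat 1 k (fun i xs => code (F i (nth 0 xs 0))) (fun xs => G (nth 0 xs 0))
              (fun xs => Phi (nth 0 xs 0))) as [t [Ht Hte]]; auto.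
  exists (fun n => t [n]). split.
  - eapply Xcomputable_ext; [|exact Ht]. intros [|n []] H; try discriminate; reflexivity.
  - intros n. rewrite (Hte [n]); auto. 2: intros; eexists; eauto.
    split; intros H; (eapply sat_ext; [|exact H]); intros i; simpl; rewrite cval_code; auto.
Qed.

Lemma Xcomputable_sat_seq_scons k (F : nat -> nat -> M) (G : nat -> nat) (Phi : nat -> form) :
  (forall n, pure (Phi n) /\ fbound (S k) (Phi n)) -> (forall i, i < k -> Xseq (F i)) ->
  Xcomputable 1 (fun xs => G (nth 0 xs 0)) -> (forall n, G n = gn (Phi n)) ->
  exists t, Xcomputable 2 t /\
    forall n a, t [code a; n] <> 0 <-> psat M (scons a (fun i => F i n)) (Phi n).
Proof.
  intros HPhi HF HG HGe.
  set (C := fun i xs => match i with 0 => nth 0 xs 0 | S j => code (F j (nth 1 xs 0)) end).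
  destruct (Xcomputable_sat 2 (S k) C (fun xs => G (nth 1 xs 0)) (fun xs => Phi (nth 1 xs 0)))
    as [t [Ht Hte]]; auto using Xcomputable_arg.
  { intros [|i] Hi; simpl. apply Xcomputable_proj. apply Xcomputable_Xseq_arg, HF; lia. }
  exists t. split; auto. intros n a. rewrite Hte; auto. 2: intros [|i] Hi; simpl; eexists; eauto.
  split; intros H; (eapply sat_ext; [|exact H]); intros [|i]; simpl; rewrite cval_code; auto.
Qed.

Lemma X_sat k (F : nat -> nat -> M) p : pure p -> fbound k p ->
  (forall i, i < k -> Xseq (F i)) -> X (fun n => psat M (fun i => F i n) p).
Proof.
  intros Hp Hb HF.
  destruct (Xcomputable_sat_seq k F (fun _ => gn p) (fun _ => p)) as [t [Ht Hte]];
    auto using Xcomputable_const.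
  apply (X_of_test _ t Ht). intros n. symmetry; apply Hte.
Qed.

(* Take the least code [c] with [t [c; n] <> 0]. *)
Lemma Xseq_search (t : list nat -> nat) : Xcomputable 2 t ->
  (forall n, exists c : M, t [code c; n] <> 0) ->
  exists w : nat -> M, Xseq w /\ forall n, t [code (w n); n] <> 0.
Proof.
  intros Ht Hex.
  set (g := fun xs => 1 - chi Dom (nth 0 xs 0) * (1 - (1 - t xs))).
  assert (Hg : Xcomputable 2 g).
  { apply Xcomputable_sub; [apply Xcomputable_const|]. apply Xcomputable_mul.
    - apply Xcomputable_chi; [auto|apply Xcomputable_proj].
    - repeat apply Xcomputable_sub; auto; apply Xcomputable_const. }
  assert (Hge : forall c n, g [c; n] = 0 <-> Dom c /\ t [c; n] <> 0).
  { intros c n. unfold g, chi. simpl nth.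
    destruct excluded_middle_informative; split; intros H; try tauto; try lia.
    split; auto; lia. }
  assert (Hex' : forall n, exists c, g [c; n] = 0).
  { intros n. destruct (Hex n) as [c Hc]. exists (code c). apply Hge. split; auto. exists c; auto. }
  set (l := fun n => least (fun c => g [c; n] = 0)).
  assert (Hl : forall n, Dom (l n) /\ t [l n; n] <> 0).
  { intros n. apply Hge. apply (least_spec (fun c => g [c; n] = 0)), Hex'. }
  exists (fun n => cv (l n)). split.
  - eapply Xcomputable_ext; [|apply (Xcomputable_min 1 g Hg)].
    + intros [|n []] H; try discriminate. simpl. rewrite code_cval; [reflexivity|apply Hl].
    + intros [|n []] H; try discriminate. apply Hex'.
  - intros n. rewrite code_cval; apply Hl.
Qed.

Definition neg_code g := pair 3 (pair g (pair 2 0)).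

(* Search for a code satisfying [Phi n], or certifying that [Phi n] has no witness at all. *)
Lemma Xseq_witness k (F : nat -> nat -> M) (G : nat -> nat) (Phi : nat -> form) :
  (forall n, pure (Phi n) /\ fbound (S k) (Phi n)) ->
  (forall i, i < k -> Xseq (F i)) ->
  Xcomputable 1 (fun xs => G (nth 0 xs 0)) -> (forall n, G n = gn (Phi n)) ->
  exists w : nat -> M, Xseq w /\ forall n,
    (exists a, psat M (scons a (fun i => F i n)) (Phi n)) ->
    psat M (scons (w n) (fun i => F i n)) (Phi n).
Proof.
  intros HPhi HF HG HGe.
  destruct (Xcomputable_sat_seq_scons k F G Phi) as [t1 [Ht1 Hsat1]]; auto.
  destruct (Xcomputable_sat_seq k F (fun n => neg_code (ex_code (G n)))
              (fun n => fNeg (fEx (Phi n)))) as [t2 [Ht2 Hsat2]]; auto.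
  { intros n. destruct (HPhi n) as [Hp Hb]. split; [apply pure_neg, pure_ex, Hp|simpl; auto]. }
  { unfold neg_code, ex_code. repeat apply Xcomputable_pair; auto; apply Xcomputable_const. }
  { intros n. rewrite HGe. reflexivity. }
  assert (Hno : forall n, t2 n <> 0 <-> ~ exists b, psat M (scons b (fun i => F i n)) (Phi n)).
  { intros n. rewrite Hsat2. unfold psat.
    change (sat ?N ?c ?r (fNeg ?q)) with (sat N c r q -> False). rewrite sat_ex. tauto. }
  destruct (Xseq_search (fun xs => t1 xs + t2 (nth 1 xs 0))) as [w [Hw Hwt]].
  - apply Xcomputable_add; auto. apply Xcomputable_arg, Ht2.
  - intros n. destruct (classic (exists a, psat M (scons a (fun i => F i n)) (Phi n)))
      as [[a Ha]|Hn].
    + exists a. apply Hsat1 in Ha. lia.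
    + exists (szero M). apply Hno in Hn. simpl. lia.
  - exists w. split; auto. intros n Hex. apply Hsat1.
    specialize (Hwt n). simpl in Hwt. destruct (Nat.eq_dec (t2 n) 0) as [E2|E2]; [lia|].
    apply Hno in E2. contradiction.
Qed.

Lemma Xseq_definable k (F : nat -> nat -> M) p (h : nat -> M) : pure p -> fbound (S k) p ->
  (forall i, i < k -> Xseq (F i)) ->
  (forall n a, psat M (scons a (fun i => F i n)) p -> a = h n) ->
  (forall n, psat M (scons (h n) (fun i => F i n)) p) ->
  Xseq h.
Proof.
  intros Hp Hb HF Huniq Hex.
  destruct (Xseq_witness k F (fun _ => gn p) (fun _ => p)) as [w [Hw Hwp]];
    auto using Xcomputable_const.
  apply (Xseq_ext w); auto. intros n. apply Huniq, Hwp. exists (h n). apply Hex.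
Qed.

Lemma Xseq_add f g : Xseq f -> Xseq g -> Xseq (fun n => sadd M (f n) (g n)).
Proof.
  intros Hf Hg.
  apply (Xseq_definable 2 (fun i n => match i with 0 => f n | _ => g n end)
           (fEq (tVar 0) (tPlus (tVar 1) (tVar 2)))); try reflexivity.
  - intros j Hj; simpl in Hj; tauto.
  - simpl; repeat split; lia.
  - intros [|[|i]] Hi; auto; lia.
  - intros n a H. exact H.
Qed.

Lemma Xseq_mul f g : Xseq f -> Xseq g -> Xseq (fun n => smul M (f n) (g n)).
Proof.
  intros Hf Hg.
  apply (Xseq_definable 2 (fun i n => match i with 0 => f n | _ => g n end)
           (fEq (tVar 0) (tTimes (tVar 1) (tVar 2)))); try reflexivity.
  - intros j Hj; simpl in Hj; tauto.
  - simpl; repeat split; lia.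
  - intros [|[|i]] Hi; auto; lia.
  - intros n a H. exact H.
Qed.

Lemma Xseq_of_inProd f : inProd X M code f -> Xseq f.
Proof.
  intros H. unfold inProd in H.
  set (g := fun xs => 1 - chi (graph M code f) (pair (nth 1 xs 0) (nth 0 xs 0))).
  eapply Xcomputable_ext; [|apply (Xcomputable_min 1 g)].
  - intros [|n []] Hl; try discriminate. simpl. apply least_unique.
    + unfold g; simpl. rewrite chi_true; auto. exists n; auto.
    + intros m Hm. unfold g, chi; simpl. destruct excluded_middle_informative as [[n' Hn']|h]; [|lia].
      apply pair_inj in Hn' as [<- ->]. lia.
  - apply Xcomputable_sub; [apply Xcomputable_const|]. apply Xcomputable_chi; [exact H|].
    apply Xcomputable_pair; apply Xcomputable_proj.
  - intros [|n []] Hl; try discriminate. exists (code (f n)). unfold g; simpl.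
    rewrite chi_true; auto. exists n; auto.
Qed.

(* [m] is in the graph of [f] iff [m = pair n (code (f n))] for some [n <= m]. *)
Lemma inProd_of_Xseq f : Xseq f -> inProd X M code f.
Proof.
  intros H. unfold inProd.
  set (test := fun ys => Nat.b2n (nth 1 ys 0 =? pair (nth 0 ys 0) (code (f (nth 0 ys 0))))).
  apply (X_of_test _ (fun m => bounded_ex test (S m) [m])).
  - eapply Xcomputable_ext; [|apply (Xcomputable_comp2 1 (fun xs => bounded_ex test (hd 0 xs) (tl xs))
       (fun xs => S (nth 0 xs 0)) (fun xs => nth 0 xs 0))].
    + intros [|m []] Hl; try discriminate. reflexivity.
    + apply Xcomputable_bounded_ex. apply Xcomputable_eqb; [apply Xcomputable_proj|].
      apply Xcomputable_pair; [apply Xcomputable_proj|apply Xcomputable_Xseq_arg; auto].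
    + apply Xcomputable_of_computable. intros; apply computable_succ.
    + apply Xcomputable_proj.
  - intros m. rewrite bounded_ex_spec. unfold graph, test. split.
    + intros [n ->]. exists n. split; cbn [nth].
      * pose proof (pair_ge_l n (code (f n))); lia.
      * rewrite Nat.eqb_refl. simpl; lia.
    + intros [n [_ Hn]]. simpl in Hn. exists n.
      destruct (Nat.eqb_spec m (pair n (code (f n)))); auto. simpl in Hn; lia.
Qed.

(** * The X-ultrapower and Łoś's theorem *)

Section Ultrapower.
Variable U : (nat -> Prop) -> Prop.
Hypothesis HU : ultrafilter X U.

Lemma U_sub_X A : U A -> X A.
Proof. apply HU. Qed.
Lemma U_full : U (fun _ => True).
Proof. apply HU. Qed.
Lemma U_not_empty : ~ U (fun _ => False).
Proof. apply HU. Qed.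
Lemma U_and A B : U A -> U B -> U (fun n => A n /\ B n).
Proof. apply HU. Qed.
Lemma U_mono A B : U A -> X B -> (forall n, A n -> B n) -> U B.
Proof. apply HU. Qed.
Lemma U_dichotomy A : X A -> U A \/ U (fun n => ~ A n).
Proof. apply HU. Qed.

Lemma U_transfer E A B : U E -> X A -> X B -> (forall n, E n -> (A n <-> B n)) -> (U A <-> U B).
Proof.
  intros HE HA HB H. split; intros H1; (eapply U_mono; [apply (U_and _ _ HE H1)| auto |]);
   intros n [h1 h2]; apply (H n h1); auto.
Qed.

Lemma X_eq_set f g : Xseq f -> Xseq g -> X (fun n => f n = g n).
Proof.
  intros Hf Hg.
  apply (X_sat 2 (fun i n => match i with 0 => f n | _ => g n end) (fEq (tVar 0) (tVar 1))).
  - intros j Hj; simpl in Hj; tauto.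
  - simpl; lia.
  - intros [|[|i]] Hi; auto; lia.
Qed.

Lemma X_lt_set f g : Xseq f -> Xseq g -> X (fun n => slt M (f n) (g n)).
Proof.
  intros Hf Hg.
  apply (X_sat 2 (fun i n => match i with 0 => f n | _ => g n end) (fLt (tVar 0) (tVar 1))).
  - intros j Hj; simpl in Hj; tauto.
  - simpl; lia.
  - intros [|[|i]] Hi; auto; lia.
Qed.

Lemma Kcar_ext (x y : Kcar X U M code) : proj1_sig x = proj1_sig y -> x = y.
Proof. destruct x, y; simpl; intros ->. f_equal. apply proof_irrelevance. Qed.

Variable HK : inhabited (Kcar X U M code).
Notation K := (Kstr X U M code HK).
Notation lift := (lift X U M code HK).
Notation rep := (rep X U M code).
Notation cls := (cls X U M code).

Lemma lift_val f : inProd X M code f -> proj1_sig (lift f) = cls f.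
Proof.
  intros H. unfold Defs.lift. destruct excluded_middle_informative; [reflexivity|contradiction].
Qed.

Lemma rep_spec C : inProd X M code (rep C) /\ proj1_sig C = cls (rep C).
Proof.
  unfold Defs.rep. destruct constructive_indefinite_description as [f Hf]. simpl. exact Hf.
Qed.

Lemma Xseq_rep C : Xseq (rep C).
Proof. apply Xseq_of_inProd, rep_spec. Qed.

Lemma cls_eq f g : Xseq f -> Xseq g -> U (fun n => f n = g n) -> cls f = cls g.
Proof.
  intros Hf Hg H. apply functional_extensionality; intros h. apply propositional_extensionality.
  unfold Defs.cls. split; intros [Hh Hu]; split; auto.
  - apply (U_mono _ _ (U_and _ _ H Hu)). apply X_eq_set; auto using Xseq_of_inProd.
    intros n [<- <-]; auto.
  - apply (U_mono _ _ (U_and _ _ H Hu)). apply X_eq_set; auto using Xseq_of_inProd.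
    intros n [-> <-]; auto.
Qed.

Lemma U_of_cls_eq f g : Xseq g -> cls f = cls g -> U (fun n => f n = g n).
Proof.
  intros Hg H. assert (Hgg : cls g g).
  { split. apply inProd_of_Xseq; auto.
    eapply U_mono; [apply U_full|apply X_eq_set; auto|auto]. }
  rewrite <- H in Hgg. apply Hgg.
Qed.

Lemma lift_eq f g : Xseq f -> Xseq g -> (lift f = lift g <-> U (fun n => f n = g n)).
Proof.
  intros Hf Hg. split.
  - intros H. apply U_of_cls_eq; auto.
    rewrite <- !lift_val by (apply inProd_of_Xseq; auto). rewrite H; auto.
  - intros H. apply Kcar_ext. rewrite !lift_val by (apply inProd_of_Xseq; auto).
    apply cls_eq; auto.
Qed.

Lemma lift_rep C : lift (rep C) = C.
Proof. apply Kcar_ext. rewrite lift_val by apply rep_spec. symmetry; apply rep_spec. Qed.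

Lemma U_rep_lift f : Xseq f -> U (fun n => rep (lift f) n = f n).
Proof.
  intros Hf. apply U_of_cls_eq; auto. rewrite <- (proj2 (rep_spec (lift f))).
  apply lift_val, inProd_of_Xseq; auto.
Qed.

Lemma lift_pointwise (op : M -> M -> M) f g :
  (forall f g, Xseq f -> Xseq g -> Xseq (fun n => op (f n) (g n))) -> Xseq f -> Xseq g ->
  lift (fun n => op (rep (lift f) n) (rep (lift g) n)) = lift (fun n => op (f n) (g n)).
Proof.
  intros Hop Hf Hg. apply lift_eq; auto using Xseq_rep.
  eapply U_mono; [apply (U_and _ _ (U_rep_lift _ Hf) (U_rep_lift _ Hg))|
    apply X_eq_set; auto using Xseq_rep|].
  intros n [-> ->]; reflexivity.
Qed.

Lemma U_rel_lift (R : M -> M -> Prop) f g :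
  (forall f g, Xseq f -> Xseq g -> X (fun n => R (f n) (g n))) -> Xseq f -> Xseq g ->
  U (fun n => R (rep (lift f) n) (rep (lift g) n)) <-> U (fun n => R (f n) (g n)).
Proof.
  intros HR Hf Hg.
  apply (U_transfer _ _ _ (U_and _ _ (U_rep_lift _ Hf) (U_rep_lift _ Hg)));
    auto using Xseq_rep.
  intros n [-> ->]; tauto.
Qed.

Definition rep_assign (r : nat -> K) (n : nat) : nat -> M := fun i => rep (r i) n.

Lemma los_term t (r : nat -> K) :
  Xseq (fun n => teval M (fun _ => szero M) (rep_assign r n) t) /\
  teval K (fun _ => szero K) r t = lift (fun n => teval M (fun _ => szero M) (rep_assign r n) t).
Proof.
  induction t; cbn [teval]; try (split; [apply Xseq_const|reflexivity]).
  - split. apply Xseq_rep. symmetry; apply lift_rep.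
  - destruct IHt1 as [H1 E1], IHt2 as [H2 E2]. split. apply Xseq_add; auto.
    rewrite E1, E2. apply lift_pointwise; auto using Xseq_add.
  - destruct IHt1 as [H1 E1], IHt2 as [H2 E2]. split. apply Xseq_mul; auto.
    rewrite E1, E2. apply lift_pointwise; auto using Xseq_mul.
Qed.

Lemma X_sat_rep k p (r : nat -> K) :
  pure p -> fbound k p -> X (fun n => psat M (rep_assign r n) p).
Proof. intros Hp Hb. apply (X_sat k (fun i n => rep (r i) n) p Hp Hb). intros; apply Xseq_rep. Qed.

Theorem los p : pure p -> forall k, fbound k p -> forall r : nat -> K,
  (psat K r p <-> U (fun n => psat M (rep_assign r n) p)).
Proof.
  induction p; intros Hp k Hb r; unfold psat in *; cbn [sat].
  - destruct (los_term t r) as [H1 E1], (los_term u r) as [H2 E2].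
    rewrite E1, E2. apply lift_eq; auto.
  - destruct (los_term t r) as [H1 E1], (los_term u r) as [H2 E2].
    rewrite E1, E2. apply U_rel_lift; auto using X_lt_set.
  - split; [tauto|intros H; exfalso; apply U_not_empty; exact H].
  - destruct Hb as [Hb1 Hb2], (pure_imp _ _ Hp) as [Hp1 Hp2].
    rewrite (IHp1 Hp1 k Hb1 r), (IHp2 Hp2 k Hb2 r).
    pose proof (X_sat_rep k p1 r Hp1 Hb1) as X1. pose proof (X_sat_rep k p2 r Hp2 Hb2) as X2.
    assert (X12 : X (fun n => psat M (rep_assign r n) p1 -> psat M (rep_assign r n) p2)).
    { apply (X_ext (fun n => ~ psat M (rep_assign r n) p1 \/ psat M (rep_assign r n) p2)).
      - apply X_union; auto. apply X_compl; auto.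
      - intros n. destruct (classic (psat M (rep_assign r n) p1)); tauto. }
    split.
    + intros H. destruct (U_dichotomy _ X1) as [h|h].
      * apply (U_mono _ _ (H h) X12). auto.
      * apply (U_mono _ _ h X12). tauto.
    + intros H h. apply (U_mono _ _ (U_and _ _ H h) X2). tauto.
  - specialize (IHp (pure_all _ Hp) (S k) Hb).
    assert (Hsc : forall a n, psat M (rep_assign (scons a r) n) p <->
                              psat M (scons (rep a n) (rep_assign r n)) p).
    { intros a n. apply sat_ext. intros [|i]; reflexivity. }
    split.
    + intros H.
      (* a counterexample to [p], if there is one, is found along an X-sequence [w] *)
      destruct (Xseq_witness k (fun i n => rep (r i) n) (fun _ => gn (fNeg p)) (fun _ => fNeg p))
        as [w [Hw Hwp]]; auto using Xcomputable_const, Xseq_rep.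
      { intros _. split; [intros j Hj; apply (Hp j); simpl in *; tauto|simpl; auto]. }
      specialize (H (lift w)). unfold psat in IHp. rewrite IHp in H.
      eapply U_mono; [apply (U_and _ _ H (U_rep_lift w Hw))|apply (X_sat_rep k (fAll p)); auto|].
      intros n [Hn Hwn] a. apply NNPP. intros Ha.
      apply (Hsc (lift w) n) in Hn. rewrite Hwn in Hn.
      apply (Hwp n); [exists a; exact Ha|exact Hn].
    + intros H a. unfold psat in IHp. rewrite IHp. eapply U_mono; [apply H| |].
      * apply (X_sat_rep (S k) p (scons a r) (pure_all _ Hp) Hb).
      * intros n Hn. apply Hsc, Hn.
Qed.

(** * Elementarity of the diagonal embedding *)

Lemma X_forall_lt (P : nat -> nat -> Prop) k :
  (forall i, i < k -> X (P i)) -> X (fun n => forall i, i < k -> P i n).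
Proof.
  induction k; intros H.
  - apply (X_ext (fun _ => True)); [apply X_full|]. intros n; split; auto. intros _ i Hi; lia.
  - apply (X_ext (fun n => (forall i, i < k -> P i n) /\ P k n)).
    + apply X_inter; auto.
    + intros n; split.
      * intros [H1 H2] i Hi. destruct (Nat.eq_dec i k); subst; auto. apply H1; lia.
      * intros H1; split; auto.
Qed.

Lemma U_forall_lt (P : nat -> nat -> Prop) k :
  (forall i, i < k -> U (P i)) -> U (fun n => forall i, i < k -> P i n).
Proof.
  induction k; intros H.
  - eapply U_mono; [apply U_full|apply X_forall_lt; intros; lia|intros n _ i Hi; lia].
  - eapply U_mono; [apply (U_and _ _ (IHk (fun i Hi => H i (Nat.lt_lt_succ_r _ _ Hi)))
                                     (H k (Nat.lt_succ_diag_r k)))| |].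
    + apply X_forall_lt. intros i Hi. apply U_sub_X, H, Hi.
    + intros n [H1 H2] i Hi. destruct (Nat.eq_dec i k); subst; auto. apply H1; lia.
Qed.

Theorem diag_emb_elementary : elementary (diag_emb X U M code HK).
Proof.
  intros p Hp r. destruct (fbound_exists p) as [k Hb].
  unfold diag_emb. rewrite (los p Hp k Hb).
  assert (HE : U (fun n => forall i, i < k -> rep (lift (fun _ => r i)) n = r i)).
  { apply U_forall_lt. intros i _. apply U_rep_lift, Xseq_const. }
  assert (Hag : forall n, (forall i, i < k -> rep (lift (fun _ => r i)) n = r i) ->
     (psat M (rep_assign (fun n => lift (fun _ => r n)) n) p <-> psat M r p)).
  { intros n Hn. apply sat_agree with (k := k); auto. }
  split.
  - intros H. eapply U_mono; [apply HE|apply (X_sat_rep k); auto|].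
    intros n Hn. apply Hag; auto.
  - intros H. destruct (classic (psat M r p)) as [h|h]; auto. exfalso. apply U_not_empty.
    eapply U_mono; [apply (U_and _ _ H HE)|apply X_empty|].
    intros n [H1 H2]. apply h, (Hag n H2), H1.
Qed.

(** * Recursive saturation *)

Hypothesis Hnp : nonprincipal U.

Lemma U_ge j : U (fun n => j <= n).
Proof.
  assert (Xlt : forall j, X (fun n => n < j)).
  { intros j0. apply (X_of_test _ (fun n => Nat.b2n (n <? j0))).
    - apply Xcomputable_ltb; [apply Xcomputable_proj|apply Xcomputable_const].
    - intros n. destruct (Nat.ltb_spec n j0); simpl; split; intros; lia. }
  assert (Hlt : forall j, ~ U (fun n => n < j)).
  { induction j0 as [|j0 IH]; intros Hu.
    - apply U_not_empty. eapply U_mono; [apply Hu|apply X_empty|intros n Hn; simpl in Hn; lia].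
    - destruct (U_dichotomy _ (Xlt j0)) as [h|h]; [exact (IH h)|].
      apply (Hnp j0). eapply U_mono; [apply (U_and _ _ Hu h)| |intros n [h1 h2]; simpl in *; lia].
      apply (X_of_test _ (fun n => Nat.b2n (n =? j0))).
      + apply Xcomputable_eqb; [apply Xcomputable_proj|apply Xcomputable_const].
      + intros n. destruct (Nat.eqb_spec n j0); simpl; split; intros; lia. }
  destruct (U_dichotomy _ (Xlt j)) as [h|h]; [exfalso; exact (Hlt j h)|].
  eapply U_mono; [apply h|apply (X_ext (fun n => ~ n < j)); [apply X_compl, Xlt|]|];
    intros n; simpl; lia.
Qed.

Section TypeRealization.
Variables (np : nat) (P : form -> Prop) (b : nat -> K).
Hypothesis HP : forall p, P p -> pure p /\ fbound (S np) p.
Hypothesis XP : X (type_codes P).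
Hypothesis Hfin : forall l : list form, (forall p, In p l -> P p) ->
  exists a : K, forall p, In p l -> psat K (scons a b) p.

Lemma pure_fbound_type_conj m : pure (type_conj P m) /\ fbound (S np) (type_conj P m).
Proof. split; [apply pure_type_conj|apply fbound_type_conj]; intros p Hp; apply HP, Hp. Qed.

(* The largest [m <= n] such that the formulas of [P] with code below [m] are jointly
   satisfiable in [M] with the parameters [b] read at coordinate [n]. *)
Definition realizable_level (n : nat) : nat :=
  last_nonzero (chi (fun m => psat M (rep_assign b n) (fEx (type_conj P m)))) n.

Lemma Xcomputable_realizable_level : Xcomputable 1 (fun xs => realizable_level (nth 0 xs 0)).
Proof.
  destruct (Xcomputable_sat 2 np (fun i xs => code (rep (b i) (nth 1 xs 0)))
              (fun xs => ex_code (type_conj_code (chi (type_codes P)) (nth 0 xs 0)))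
              (fun xs => fEx (type_conj P (nth 0 xs 0)))) as [t [Ht Hte]].
  - intros xs. destruct (pure_fbound_type_conj (nth 0 xs 0)) as [Hp Hb].
    split; [apply pure_ex, Hp|simpl; auto].
  - intros i _. apply Xcomputable_Xseq_arg, Xseq_rep.
  - unfold ex_code. repeat apply Xcomputable_pair; try apply Xcomputable_const.
    apply Xcomputable_arg, Xcomputable_type_conj_code; auto.
  - intros xs _. change (gn (fEx ?q)) with (ex_code (gn q)). rewrite gn_type_conj. reflexivity.
  - eapply Xcomputable_ext; [|apply (Xcomputable_last_nonzero (fun m n => t [m; n]))].
    + intros [|n []] H; try discriminate. cbn [nth]. apply last_nonzero_ext. intros m.
      assert (Hmn : t [m; n] <> 0 <-> psat M (rep_assign b n) (fEx (type_conj P m))).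
      { rewrite (Hte [m; n]); [|reflexivity|intros; eexists; eauto].
        split; intros H'; (eapply sat_ext; [|exact H']); intros i; simpl; rewrite cval_code; auto. }
      unfold chi. destruct excluded_middle_informative as [h|h]; rewrite <- Hmn in h; lia.
    + eapply Xcomputable_ext; [|exact Ht]. intros [|m [|n []]] H; try discriminate; reflexivity.
Qed.

Lemma realizable_level_sat n : psat M (rep_assign b n) (fEx (type_conj P (realizable_level n))).
Proof.
  unfold realizable_level.
  destruct (last_nonzero_spec (chi (fun m => psat M (rep_assign b n) (fEx (type_conj P m)))) n)
    as [E|E].
  - rewrite E. unfold psat; rewrite sat_ex. exists (szero M). simpl. auto.
  - unfold chi in E. destruct excluded_middle_informative; [assumption|lia].
Qed.

Lemma realizable_level_ge n m : 0 < m -> m <= n ->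
  psat M (rep_assign b n) (fEx (type_conj P m)) -> m <= realizable_level n.
Proof. intros. apply last_nonzero_ge; auto. rewrite chi_true; auto. Qed.

Lemma Xseq_realizing :
  exists w, Xseq w /\
    forall n, psat M (scons (w n) (rep_assign b n)) (type_conj P (realizable_level n)).
Proof.
  destruct (Xseq_witness np (fun i n => rep (b i) n)
              (fun n => type_conj_code (chi (type_codes P)) (realizable_level n))
              (fun n => type_conj P (realizable_level n))) as [w [Hw Hwp]].
  - intros n; apply pure_fbound_type_conj.
  - intros i _; apply Xseq_rep.
  - apply (Xcomputable_comp1 1 (fun xs => type_conj_code (chi (type_codes P)) (nth 0 xs 0))
             (fun xs => realizable_level (nth 0 xs 0))).
    + apply Xcomputable_type_conj_code; auto.
    + apply Xcomputable_realizable_level.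
  - intros n. symmetry; apply gn_type_conj.
  - exists w. split; auto. intros n. apply Hwp.
    pose proof (realizable_level_sat n) as H. unfold psat in H. rewrite sat_ex in H. exact H.
Qed.

Lemma U_type_conj_realizable m : U (fun n => psat M (rep_assign b n) (fEx (type_conj P m))).
Proof.
  destruct (type_fragment_finite P m) as [L HL].
  destruct (Hfin L) as [a Ha]. { intros q Hq; apply HL, Hq. }
  destruct (pure_fbound_type_conj m) as [Hp Hb].
  apply (los (fEx (type_conj P m)) (pure_ex _ Hp) np); [simpl; auto|].
  unfold psat. rewrite sat_ex. exists a. rewrite sat_type_conj.
  intros p Hp' Hgp. apply Ha, HL; auto.
Qed.

(* Almost every coordinate [n] satisfies a fragment of [P] beyond [gn p], and [w n] realizes
   that fragment; so [lift w] satisfies [p] by Łoś. *)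
Theorem type_realized : exists a : K, forall p, P p -> psat K (scons a b) p.
Proof.
  destruct Xseq_realizing as [w [Hw Hwp]].
  exists (lift w). intros p Hp. destruct (HP p Hp) as [Hpp Hpb].
  rewrite (los p Hpp (S np) Hpb).
  eapply U_mono; [apply (U_and _ _ (U_and _ _ (U_type_conj_realizable (S (gn p))) (U_ge (S (gn p))))
                                   (U_rep_lift w Hw))
                 |apply (X_sat_rep (S np)); auto|].
  intros n [[H1 H2] H3].
  assert (Hj : S (gn p) <= realizable_level n) by (apply realizable_level_ge; auto; lia).
  specialize (Hwp n). unfold psat in Hwp. rewrite sat_type_conj in Hwp.
  eapply sat_ext; [|apply (Hwp p Hp); lia]. intros [|i]; unfold rep_assign; simpl; auto.
Qed.
End TypeRealization.

Theorem Kstr_rec_saturated : rec_saturated K.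
Proof.
  intros np P b HP Hrec Hfin. apply (type_realized np P b); auto.
  apply X_of_recursive, Hrec.
Qed.
End Ultrapower.
End CodedModel.
End ScottSet.

Theorem mainTheorem20
  (X : (nat -> Prop) -> Prop) (T : nat -> Prop) (M : structure) (code : M -> nat)
  (U : (nat -> Prop) -> Prop) :
  scott_set X ->
  X T -> compl_ext_PA T ->
  models_LA M T ->
  coded_in X M code ->
  ultrafilter X U -> nonprincipal U ->
  exists HK : inhabited (Kcar X U M code),
    elementary (diag_emb X U M code HK) /\
    rec_saturated (Kstr X U M code HK).
Proof.
  intros HX _ _ _ [Hinj [HDom HDiag]] HU Hnp.
  assert (HK : inhabited (Kcar X U M code)).
  { constructor. exists (cls X U M code (fun _ => szero M)).
    exists (fun _ => szero M). split; [|reflexivity].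
    apply (inProd_of_Xseq X HX), (Xseq_const X HX). }
  exists HK. split.
  - exact (diag_emb_elementary X HX M code Hinj HDom HDiag U HU HK).
  - exact (Kstr_rec_saturated X HX M code Hinj HDom HDiag U HU HK Hnp).
Qed.
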